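(* Let $T,R,\epsilon,\lambda>0$ and let $U=(\phi,A)$ with $A=A_0dy^0+A_1dy^1+A_2dy^2$ be a smooth configuration on $[0,T]\times\overline{B_\nu(R)}$, $B_\nu(R)\subset\mathbb R^2$. For $s\in[0,T]$ write $U(s)$ for the 2d configuration $(\phi(s,\cdot),A_1(s,\cdot)dy^1+A_2(s,\cdot)dy^2)$. Then for all $r\in(0,R)$ and $t\in(0,T)$, $$\Big|\int_{B_\nu(r)}\omega(U(t))-\int_{B_\nu(r)}\omega(U(0))\Big|\le\max\{1,\lambda^{-1}\}\int_{(0,t)\times\partial B_\nu(r)}e^{3d}_{\epsilon,\lambda}(U)\,d\mathcal H^2,$$ where $e^{3d}_{\epsilon,\lambda}(U)=\frac12\sum_{a=0}^2|D_a\phi|^2+\frac{\epsilon^2}2\sum_{0\le a<b\le2}F_{ab}^2+\frac{\lambda}{8\epsilon^2}(|\phi|^2-1)^2$.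
   Context: Points of $(0,T)\times B_\nu(R)$ are written $(y^0,y^\nu)$, $y^\nu=(y^1,y^2)$, $B_\nu(r)=\{|y^\nu|<r\}$. $D_a\phi=\partial_a\phi-iA_a\phi$, $F_{ab}=\partial_aA_b-\partial_bA_a$, $\langle f,g\rangle=\mathrm{Re}(f\bar g)$. For a 2d configuration $V=(\phi,A_1dy^1+A_2dy^2)$: $j(V)=(\langle i\phi,D_1\phi\rangle,\langle i\phi,D_2\phi\rangle)$, $\omega(V)=\frac12(\partial_1j_2-\partial_2j_1+F_{12})$. $\mathcal H^2$ is two-dimensional Hausdorff measure. *)

From Stdlib Require Import Reals Lra List ClassicalEpsilon.
Open Scope R_scope.

(* Real-valued functions of (y0, y1, y2) = (s, x, y). *)
Definition F3 := R -> R -> R -> R.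

Definition has_partial (i : nat) (f : F3) (s x y l : R) : Prop :=
  match i with
  | O => derivable_pt_lim (fun u => f u x y) s l
  | S O => derivable_pt_lim (fun u => f s u y) x l
  | _ => derivable_pt_lim (fun u => f s x u) y l
  end.

(* The partial derivative (its value when it exists; unspecified otherwise). *)
Definition Dpart (i : nat) (f : F3) : F3 :=
  fun s x y => epsilon (inhabits 0) (fun l => has_partial i f s x y l).

Fixpoint pdl (l : list nat) (f : F3) : F3 :=
  match l with
  | nil => f
  | i :: l' => Dpart i (pdl l' f)
  end.

Definition continuous3_at (f : F3) (s x y : R) : Prop :=
  forall e, 0 < e -> exists d, 0 < d /\
    forall s' x' y', Rabs (s' - s) < d -> Rabs (x' - x) < d -> Rabs (y' - y) < d ->
      Rabs (f s' x' y' - f s x y) < e.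

Definition open3 (O : R -> R -> R -> Prop) : Prop :=
  forall s x y, O s x y -> exists d, 0 < d /\
    forall s' x' y', Rabs (s' - s) < d -> Rabs (x' - x) < d -> Rabs (y' - y) < d ->
      O s' x' y'.

Definition smooth_on (O : R -> R -> R -> Prop) (f : F3) : Prop :=
  forall (l : list nat) s x y, O s x y ->
    continuous3_at (pdl l f) s x y /\
    forall i, (i <= 2)%nat -> exists v, has_partial i (pdl l f) s x y v.

(* The Riemann integral on [a,b] (value when integrable; unspecified otherwise). *)
Definition Rint (f : R -> R) (a b : R) : R :=
  epsilon (inhabits 0) (fun v => exists pr : Riemann_integrable f a b, RiemannInt pr = v).

(* Integral over the disk B(r) in the (y1,y2)-plane, as an iterated integral. *)
Definition disk_int (g : R -> R -> R) (r : R) : R :=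
  Rint (fun x => Rint (fun y => g x y) (- sqrt (r ^ 2 - x ^ 2)) (sqrt (r ^ 2 - x ^ 2))) (- r) r.

(* Integral over the cylinder (0,t) x dB(r) w.r.t. 2-dim Hausdorff measure
   (surface element  r dtheta ds). *)
Definition cyl_int (h : F3) (t r : R) : R :=
  Rint (fun s => Rint (fun th => h s (r * cos th) (r * sin th) * r) 0 (2 * PI)) 0 t.

(* A configuration: phi = p + i q, A = A0 dy0 + A1 dy1 + A2 dy2. *)
Definition Aof (A0 A1 A2 : F3) (a : nat) : F3 :=
  match a with O => A0 | S O => A1 | _ => A2 end.

(* D_a phi = d_a phi - i A_a phi: real and imaginary parts. *)
Definition Dre (p q : F3) (Aa : F3) (a : nat) : F3 :=
  fun s x y => Dpart a p s x y + Aa s x y * q s x y.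
Definition Dim (p q : F3) (Aa : F3) (a : nat) : F3 :=
  fun s x y => Dpart a q s x y - Aa s x y * p s x y.

Definition Dsq (p q Aa : F3) (a : nat) : F3 :=
  fun s x y => (Dre p q Aa a s x y) ^ 2 + (Dim p q Aa a s x y) ^ 2.

Definition Fab (A0 A1 A2 : F3) (a b : nat) : F3 :=
  fun s x y => Dpart a (Aof A0 A1 A2 b) s x y - Dpart b (Aof A0 A1 A2 a) s x y.

(* j_k = < i phi, D_k phi > = Re (i phi * conj (D_k phi)), k = 1,2 *)
Definition jcur (p q Ak : F3) (k : nat) : F3 :=
  fun s x y => (- q s x y) * Dre p q Ak k s x y + p s x y * Dim p q Ak k s x y.

Definition omega (p q A1 A2 : F3) : F3 :=
  fun s x y => / 2 * (Dpart 1 (jcur p q A2 2) s x y - Dpart 2 (jcur p q A1 1) s x y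
                      + (Dpart 1 A2 s x y - Dpart 2 A1 s x y)).

Definition e3d (eps lam : R) (p q A0 A1 A2 : F3) : F3 :=
  fun s x y =>
    / 2 * (Dsq p q A0 0 s x y + Dsq p q A1 1 s x y + Dsq p q A2 2 s x y)
    + eps ^ 2 / 2 * ((Fab A0 A1 A2 0 1 s x y) ^ 2 + (Fab A0 A1 A2 0 2 s x y) ^ 2
                     + (Fab A0 A1 A2 1 2 s x y) ^ 2)
    + lam / (8 * eps ^ 2) * ((p s x y) ^ 2 + (q s x y) ^ 2 - 1) ^ 2.

From Stdlib Require Import Reals Lra Lia List ClassicalEpsilon FunctionalExtensionality.
From Coquelicot Require Import Coquelicot.
Open Scope R_scope.

(* By Green's theorem, the vorticity integral over [B(r)] at time [s] is half the circulation
   [K s] of [J = j + A] around the circle. Differentiating under the integral sign, [K' s] is the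
   circulation of [d_0 J]; subtracting the tangential derivative of [J_0], whose circulation
   vanishes, leaves the tangential part of [d_0 J_k - d_k J_0 = 2 <i D_0 phi, D_k phi> +
   (1 - |phi|^2) F_0k] (the second derivatives of [phi] cancel by Schwarz). Cauchy-Schwarz and
   AM-GM bound it by [2 max(1, 1/lambda) e3d], and integrating [K'] over [(0, t)] concludes. *)

(** * Partial derivatives and smoothness *)

Lemma Rint_RInt f a b : ex_RInt f a b -> Rint f a b = RInt f a b.
Proof.
  intros H. unfold Rint.
  pose proof (ex_RInt_Reals_0 _ _ _ H) as pr.
  assert (E : exists v, exists pr : Riemann_integrable f a b, RiemannInt pr = v)
    by (exists (RiemannInt pr); exists pr; reflexivity).
  destruct (epsilon_spec (inhabits 0) _ E) as [pr' Hpr'].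
  rewrite <- Hpr'. symmetry. apply RInt_Reals.
Qed.

Lemma Dpart_unique i f s x y l : has_partial i f s x y l -> Dpart i f s x y = l.
Proof.
  intros H. unfold Dpart.
  assert (E : exists l, has_partial i f s x y l) by (exists l; exact H).
  pose proof (epsilon_spec (inhabits 0) _ E) as H'.
  destruct i as [|[|i]]; simpl in *; eapply uniqueness_limite; eauto.
Qed.

Lemma pdl_app l1 l2 f : pdl (l1 ++ l2) f = pdl l1 (pdl l2 f).
Proof. induction l1; simpl; [reflexivity | now rewrite IHl1]. Qed.

Lemma smooth_on_Dpart O f i : smooth_on O f -> smooth_on O (Dpart i f).
Proof.
  intros H l s x y Hs. specialize (H (l ++ i :: nil) s x y Hs).
  rewrite pdl_app in H. exact H.
Qed.

Lemma smooth_on_continuous3 O f s x y : smooth_on O f -> O s x y -> continuous3_at f s x y.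
Proof. intros H Hs. exact (proj1 (H nil s x y Hs)). Qed.

Lemma smooth_on_has_partial O f i s x y : smooth_on O f -> O s x y -> (i <= 2)%nat ->
  has_partial i f s x y (Dpart i f s x y).
Proof.
  intros H Hs Hi. destruct (proj2 (H nil s x y Hs) i Hi) as [v Hv].
  simpl in Hv. rewrite (Dpart_unique _ _ _ _ _ _ Hv). exact Hv.
Qed.

Lemma has_partial_plus i F G s x y l1 l2 :
  has_partial i F s x y l1 -> has_partial i G s x y l2 ->
  has_partial i (fun s x y => F s x y + G s x y) s x y (l1 + l2).
Proof. destruct i as [|[|i]]; simpl; intros; now apply derivable_pt_lim_plus. Qed.

Lemma has_partial_minus i F G s x y l1 l2 :
  has_partial i F s x y l1 -> has_partial i G s x y l2 ->
  has_partial i (fun s x y => F s x y - G s x y) s x y (l1 - l2).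
Proof. destruct i as [|[|i]]; simpl; intros; now apply derivable_pt_lim_minus. Qed.

Lemma has_partial_mult i F G s x y l1 l2 :
  has_partial i F s x y l1 -> has_partial i G s x y l2 ->
  has_partial i (fun s x y => F s x y * G s x y) s x y (l1 * G s x y + F s x y * l2).
Proof.
  destruct i as [|[|i]]; simpl; intros H1 H2.
  - exact (derivable_pt_lim_mult (fun u => F u x y) (fun u => G u x y) s l1 l2 H1 H2).
  - exact (derivable_pt_lim_mult (fun u => F s u y) (fun u => G s u y) x l1 l2 H1 H2).
  - exact (derivable_pt_lim_mult (fun u => F s x u) (fun u => G s x u) y l1 l2 H1 H2).
Qed.

Lemma has_partial_opp i F s x y l : has_partial i F s x y l ->
  has_partial i (fun s x y => - F s x y) s x y (- l).
Proof. destruct i as [|[|i]]; simpl; intros; now apply derivable_pt_lim_opp. Qed.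

Lemma has_partial_val i F s x y l l' : l = l' -> has_partial i F s x y l -> has_partial i F s x y l'.
Proof. intros; now subst. Qed.

(** * Continuity in three variables *)

Lemma continuous3_at_const c s x y : continuous3_at (fun _ _ _ => c) s x y.
Proof. intros e He. exists 1. split; [lra|]. intros. rewrite Rminus_eq_0, Rabs_R0. exact He. Qed.

Lemma continuous3_at_plus F G s x y : continuous3_at F s x y -> continuous3_at G s x y ->
  continuous3_at (fun s x y => F s x y + G s x y) s x y.
Proof.
  intros HF HG e He. destruct (HF (e / 2)) as [d1 [Hd1 H1]]; [lra|].
  destruct (HG (e / 2)) as [d2 [Hd2 H2]]; [lra|].
  exists (Rmin d1 d2). split; [now apply Rmin_glb_lt|].
  intros s' x' y' Hs Hx Hy.
  pose proof (Rmin_l d1 d2). pose proof (Rmin_r d1 d2).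
  specialize (H1 s' x' y' ltac:(lra) ltac:(lra) ltac:(lra)).
  specialize (H2 s' x' y' ltac:(lra) ltac:(lra) ltac:(lra)).
  replace (F s' x' y' + G s' x' y' - (F s x y + G s x y))
    with ((F s' x' y' - F s x y) + (G s' x' y' - G s x y)) by ring.
  eapply Rle_lt_trans; [apply Rabs_triang | lra].
Qed.

Lemma continuous3_at_opp F s x y : continuous3_at F s x y ->
  continuous3_at (fun s x y => - F s x y) s x y.
Proof.
  intros HF e He. destruct (HF e He) as [d [Hd H]]. exists d. split; auto.
  intros. replace (- F s' x' y' - - F s x y) with (- (F s' x' y' - F s x y)) by ring.
  rewrite Rabs_Ropp. auto.
Qed.

Lemma continuous3_at_minus F G s x y : continuous3_at F s x y -> continuous3_at G s x y ->
  continuous3_at (fun s x y => F s x y - G s x y) s x y.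
Proof.
  intros. apply (continuous3_at_plus F (fun s x y => - G s x y)); auto.
  now apply continuous3_at_opp.
Qed.

Lemma continuous3_at_mult F G s x y : continuous3_at F s x y -> continuous3_at G s x y ->
  continuous3_at (fun s x y => F s x y * G s x y) s x y.
Proof.
  intros HF HG e He.
  set (a := Rabs (F s x y)). set (b := Rabs (G s x y)).
  assert (Ha : 0 <= a) by apply Rabs_pos. assert (Hb : 0 <= b) by apply Rabs_pos.
  set (k := Rmin 1 (e / (a + b + 2))).
  assert (Hk : 0 < k) by (apply Rmin_glb_lt; [lra | apply Rdiv_lt_0_compat; lra]).
  assert (Hk1 : k <= 1) by apply Rmin_l.
  assert (Hk2 : k * (a + b + 2) <= e).
  { apply Rle_trans with (e / (a + b + 2) * (a + b + 2)).
    - apply Rmult_le_compat_r; [lra | apply Rmin_r].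
    - right. field. lra. }
  destruct (HF k Hk) as [d1 [Hd1 H1]]. destruct (HG k Hk) as [d2 [Hd2 H2]].
  exists (Rmin d1 d2). split; [now apply Rmin_glb_lt|].
  intros s' x' y' Hs Hx Hy.
  pose proof (Rmin_l d1 d2). pose proof (Rmin_r d1 d2).
  specialize (H1 s' x' y' ltac:(lra) ltac:(lra) ltac:(lra)).
  specialize (H2 s' x' y' ltac:(lra) ltac:(lra) ltac:(lra)).
  replace (F s' x' y' * G s' x' y' - F s x y * G s x y) with
    ((F s' x' y' - F s x y) * G s' x' y' + F s x y * (G s' x' y' - G s x y)) by ring.
  eapply Rle_lt_trans; [apply Rabs_triang|]. rewrite !Rabs_mult.
  assert (HG' : Rabs (G s' x' y') <= b + k).
  { unfold b. replace (G s' x' y') with (G s x y + (G s' x' y' - G s x y)) by ring.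
    eapply Rle_trans; [apply Rabs_triang | lra]. }
  assert (Rabs (F s' x' y' - F s x y) * Rabs (G s' x' y') <= k * (b + k))
    by (apply Rmult_le_compat; try apply Rabs_pos; lra).
  assert (Rabs (F s x y) * Rabs (G s' x' y' - G s x y) <= a * k)
    by (fold a; apply Rmult_le_compat_l; lra).
  nra.
Qed.

Lemma continuous3_at_pow2 F s x y : continuous3_at F s x y ->
  continuous3_at (fun s x y => F s x y ^ 2) s x y.
Proof.
  intros H. assert (E : (fun s x y => F s x y ^ 2) = (fun s x y => F s x y * F s x y)).
  { do 3 (apply functional_extensionality; intro). ring. }
  rewrite E. now apply continuous3_at_mult.
Qed.

Lemma continuous3_at_slice_s F s x y : continuous3_at F s x y ->
  continuity_2d_pt (fun u v => F s u v) x y.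
Proof.
  intros H eps. destruct (H eps (cond_pos eps)) as [d [Hd Hd']].
  exists (mkposreal d Hd). intros u v Hu Hv. apply Hd'; auto. rewrite Rminus_eq_0, Rabs_R0. lra.
Qed.

Lemma continuous3_at_slice_x F s x y : continuous3_at F s x y ->
  continuity_2d_pt (fun u v => F u x v) s y.
Proof.
  intros H eps. destruct (H eps (cond_pos eps)) as [d [Hd Hd']].
  exists (mkposreal d Hd). intros u v Hu Hv. apply Hd'; auto. rewrite Rminus_eq_0, Rabs_R0. lra.
Qed.

Lemma continuous3_at_slice_y F s x y : continuous3_at F s x y ->
  continuity_2d_pt (fun u v => F u v y) s x.
Proof.
  intros H eps. destruct (H eps (cond_pos eps)) as [d [Hd Hd']].
  exists (mkposreal d Hd). intros u v Hu Hv. apply Hd'; auto. rewrite Rminus_eq_0, Rabs_R0. lra.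
Qed.

(** * Real analysis in one and two variables *)

(* Coquelicot's generic lemmas, instantiated at [R]: stated for an abstract ring they do
   not unify with [Rplus]/[Rmult] goals. *)
Lemma RInt_plusR (f g : R -> R) a b : ex_RInt f a b -> ex_RInt g a b ->
  RInt (fun x => f x + g x) a b = RInt f a b + RInt g a b.
Proof. intros H1 H2. exact (RInt_plus (V := R_CompleteNormedModule) f g a b H1 H2). Qed.
Lemma RInt_minusR (f g : R -> R) a b : ex_RInt f a b -> ex_RInt g a b ->
  RInt (fun x => f x - g x) a b = RInt f a b - RInt g a b.
Proof. intros H1 H2. exact (RInt_minus (V := R_CompleteNormedModule) f g a b H1 H2). Qed.
Lemma RInt_oppR (f : R -> R) a b : ex_RInt f a b -> RInt (fun x => - f x) a b = - RInt f a b.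
Proof. intros H. exact (RInt_opp (V := R_CompleteNormedModule) f a b H). Qed.
Lemma RInt_scalR (f : R -> R) a b c : ex_RInt f a b ->
  RInt (fun x => c * f x) a b = c * RInt f a b.
Proof. intros H. exact (RInt_scal (V := R_CompleteNormedModule) f a b c H). Qed.
Lemma RInt_swapR (f : R -> R) a b : ex_RInt f a b -> RInt f b a = - RInt f a b.
Proof. intros H. rewrite <- (opp_RInt_swap (V := R_CompleteNormedModule) f a b H). reflexivity. Qed.
Lemma RInt_ChaslesR (f : R -> R) a b c : ex_RInt f a b -> ex_RInt f b c ->
  RInt f a b + RInt f b c = RInt f a c.
Proof. intros H1 H2. exact (RInt_Chasles (V := R_CompleteNormedModule) f a b c H1 H2). Qed.
Lemma ex_RInt_minusR (f g : R -> R) a b : ex_RInt f a b -> ex_RInt g a b ->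
  ex_RInt (fun x => f x - g x) a b.
Proof. intros H1 H2. exact (ex_RInt_minus (V := R_CompleteNormedModule) f g a b H1 H2). Qed.
Lemma ex_RInt_scalR (f : R -> R) a b c : ex_RInt f a b -> ex_RInt (fun x => c * f x) a b.
Proof. intros H. exact (ex_RInt_scal (V := R_CompleteNormedModule) f a b c H). Qed.
Lemma ex_RInt_continuousR (f : R -> R) a b :
  (forall z, Rmin a b <= z <= Rmax a b -> continuous f z) -> ex_RInt f a b.
Proof. intros H. exact (ex_RInt_continuous (V := R_CompleteNormedModule) f a b H). Qed.
Lemma continuous_constR (c x : R) : continuous (fun _ : R => c) x.
Proof. apply continuous_const. Qed.
Lemma continuous_idR (x : R) : continuous (fun t : R => t) x.
Proof. apply continuous_id. Qed.
Lemma continuous_plusR (f g : R -> R) x : continuous f x -> continuous g x ->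
  continuous (fun t => f t + g t) x.
Proof. intros H1 H2. exact (continuous_plus f g x H1 H2). Qed.
Lemma continuous_minusR (f g : R -> R) x : continuous f x -> continuous g x ->
  continuous (fun t => f t - g t) x.
Proof. intros H1 H2. exact (continuous_minus f g x H1 H2). Qed.
Lemma continuous_oppR (f : R -> R) x : continuous f x -> continuous (fun t => - f t) x.
Proof. intros H. exact (continuous_opp f x H). Qed.
Lemma continuous_multR (f g : R -> R) x : continuous f x -> continuous g x ->
  continuous (fun t => f t * g t) x.
Proof. intros H1 H2. exact (continuous_mult f g x H1 H2). Qed.

Lemma locally_of_Rabs (x : R) (P : R -> Prop) :
  (exists d : posreal, forall y, Rabs (y - x) < d -> P y) -> locally x P.
Proof. intros [d Hd]. exists d. intros y Hy. apply Hd. exact Hy. Qed.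

Lemma Rabs_of_locally (x : R) (P : R -> Prop) :
  locally x P -> exists d : posreal, forall y, Rabs (y - x) < d -> P y.
Proof. intros [d Hd]. exists d. intros y Hy. apply Hd. exact Hy. Qed.

Lemma continuous_Rabs_eps (f : R -> R) x : continuous f x ->
  forall eps : posreal, exists d : posreal, forall y, Rabs (y - x) < d -> Rabs (f y - f x) < eps.
Proof.
  intros H eps. apply filterlim_locally with (eps := eps) in H.
  destruct (Rabs_of_locally _ _ H) as [d Hd]. exists d. intros y Hy. apply (Hd y Hy).
Qed.

Lemma continuous_of_Rabs_eps (f : R -> R) x :
  (forall eps : posreal, exists d : posreal, forall y, Rabs (y - x) < d -> Rabs (f y - f x) < eps) ->
  continuous f x.
Proof.
  intros H. apply filterlim_locally. intros eps. apply locally_of_Rabs.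
  destruct (H eps) as [d Hd]. exists d. intros y Hy. apply (Hd y Hy).
Qed.

Lemma Rabs_le_shift x x0 d : Rabs (x - x0) <= d -> Rabs x <= Rabs x0 + d.
Proof.
  intros H. replace x with (x0 + (x - x0)) by ring.
  eapply Rle_trans; [apply Rabs_triang | lra].
Qed.

Lemma continuous_comp_2d (F : R -> R -> R) (f g : R -> R) x :
  continuity_2d_pt F (f x) (g x) -> continuous f x -> continuous g x ->
  continuous (fun t => F (f t) (g t)) x.
Proof.
  intros HF Hf Hg. apply (continuous_comp_2 f g F x Hf Hg).
  apply continuity_2d_pt_filterlim in HF. exact HF.
Qed.

Lemma continuity_2d_pt_comp_fst (F : R -> R -> R) (f : R -> R) x y :
  continuity_2d_pt F (f x) y -> continuous f x -> continuity_2d_pt (fun a b => F (f a) b) x y.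
Proof.
  intros HF Hf eps. destruct (HF eps) as [d Hd].
  destruct (continuous_Rabs_eps f x Hf d) as [d' Hd'].
  assert (H0 : 0 < Rmin d d') by (destruct d, d'; simpl; apply Rmin_glb_lt; lra).
  exists (mkposreal _ H0). simpl. intros u v Hu Hv. apply Hd.
  - apply Hd'. eapply Rlt_le_trans; [exact Hu | apply Rmin_r].
  - eapply Rlt_le_trans; [exact Hv | apply Rmin_l].
Qed.

Lemma continuity_2d_pt_fst (f : R -> R) x y : continuous f x ->
  continuity_2d_pt (fun a _ => f a) x y.
Proof.
  intros Hf eps. destruct (continuous_Rabs_eps f x Hf eps) as [d Hd].
  exists d. intros u v Hu Hv. apply Hd. exact Hu.
Qed.

Lemma continuity_2d_pt_snd (f : R -> R) x y : continuous f y ->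
  continuity_2d_pt (fun _ b => f b) x y.
Proof.
  intros Hf eps. destruct (continuous_Rabs_eps f y Hf eps) as [d Hd].
  exists d. intros u v Hu Hv. apply Hd. exact Hv.
Qed.

Lemma continuous_of_continuity_2d_pt (F : R -> R -> R) s t : continuity_2d_pt F s t -> continuous (F s) t.
Proof.
  intros H. apply (continuous_comp_2d F (fun _ => s) (fun t => t) t);
    [exact H | apply continuous_constR | apply continuous_idR].
Qed.

Lemma ex_RInt_slice (g : R -> R -> R) x a b :
  (forall u, Rmin a b <= u <= Rmax a b -> continuity_2d_pt g x u) -> ex_RInt (g x) a b.
Proof.
  intros H. apply ex_RInt_continuousR. intros z Hz.
  apply (continuous_comp_2d g (fun _ => x) (fun t => t) z);
    [now apply H | apply continuous_constR | apply continuous_idR].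
Qed.

Lemma Rabs_RInt_le_const f a b M : ex_RInt f a b ->
  (forall t, Rmin a b <= t <= Rmax a b -> Rabs (f t) <= M) ->
  Rabs (RInt f a b) <= Rabs (b - a) * M.
Proof.
  intros Hex H. destruct (Rle_dec a b) as [Hab|Hab].
  - rewrite (Rabs_right (b - a)) by lra. apply abs_RInt_le_const; auto.
    intros t Ht. apply H. rewrite Rmin_left, Rmax_right; lra.
  - rewrite (RInt_swapR f b a (ex_RInt_swap _ _ _ Hex)), Rabs_Ropp.
    rewrite (Rabs_left (b - a)) by lra. replace (- (b - a)) with (a - b) by ring.
    apply abs_RInt_le_const; [lra | now apply ex_RInt_swap |].
    intros t Ht. apply H. rewrite Rmin_right, Rmax_left; lra.
Qed.

Lemma Rabs_cos_sub_le a b : Rabs (cos a - cos b) <= Rabs (a - b).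
Proof.
  destruct (MVT_abs cos (fun c => - sin c) b a) as [c [Hc _]].
  { intros c _. apply derivable_pt_lim_cos. }
  rewrite Hc. rewrite <- (Rmult_1_l (Rabs (a - b))) at 2.
  apply Rmult_le_compat_r; [apply Rabs_pos|]. rewrite Rabs_Ropp.
  apply Rabs_le. apply SIN_bound.
Qed.

Lemma Rabs_sin_sub_le a b : Rabs (sin a - sin b) <= Rabs (a - b).
Proof.
  destruct (MVT_abs sin cos b a) as [c [Hc _]].
  { intros c _. apply derivable_pt_lim_sin. }
  rewrite Hc. rewrite <- (Rmult_1_l (Rabs (a - b))) at 2.
  apply Rmult_le_compat_r; [apply Rabs_pos|].
  apply Rabs_le. apply COS_bound.
Qed.

Lemma continuous_mult_cos r x : continuous (fun t => r * cos t) x.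
Proof. apply (ex_derive_continuous (K := R_AbsRing) (V := R_NormedModule)). auto_derive. auto. Qed.

Lemma continuous_mult_sin r x : continuous (fun t => r * sin t) x.
Proof. apply (ex_derive_continuous (K := R_AbsRing) (V := R_NormedModule)). auto_derive. auto. Qed.

Lemma continuous_half_chord r x : continuous (fun x => sqrt (r ^ 2 - x ^ 2)) x.
Proof.
  apply continuous_sqrt_comp. apply (ex_derive_continuous (K := R_AbsRing) (V := R_NormedModule)).
  auto_derive. auto.
Qed.

Lemma continuous_along_circle (F : R -> R -> R) r t :
  continuity_2d_pt F (r * cos t) (r * sin t) ->
  continuous (fun t => F (r * cos t) (r * sin t)) t.
Proof.
  intros H. apply (continuous_comp_2d F (fun t => r * cos t) (fun t => r * sin t));
    auto using continuous_mult_cos, continuous_mult_sin.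
Qed.

Lemma continuous3_at_circle F r s t : 0 <= r -> continuous3_at F s (r * cos t) (r * sin t) ->
  continuity_2d_pt (fun u v => F u (r * cos v) (r * sin v)) s t.
Proof.
  intros Hr H eps. destruct (H eps (cond_pos eps)) as [d [Hd Hd']].
  assert (Hd2 : 0 < Rmin d (d / (r + 1))) by (apply Rmin_glb_lt; [lra | apply Rdiv_lt_0_compat; lra]).
  exists (mkposreal _ Hd2). simpl. intros u v Hu Hv.
  pose proof (Rmin_l d (d / (r + 1))). pose proof (Rmin_r d (d / (r + 1))).
  assert (Hrv : r * Rabs (v - t) < d).
  { apply Rle_lt_trans with ((r + 1) * Rabs (v - t)).
    - apply Rmult_le_compat_r; [apply Rabs_pos | lra].
    - apply Rlt_le_trans with ((r + 1) * (d / (r + 1))); [apply Rmult_lt_compat_l; lra | right; field; lra]. }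
  apply Hd'.
  - lra.
  - replace (r * cos v - r * cos t) with (r * (cos v - cos t)) by ring.
    rewrite Rabs_mult, (Rabs_pos_eq r Hr). eapply Rle_lt_trans; [| exact Hrv].
    apply Rmult_le_compat_l; [lra | apply Rabs_cos_sub_le].
  - replace (r * sin v - r * sin t) with (r * (sin v - sin t)) by ring.
    rewrite Rabs_mult, (Rabs_pos_eq r Hr). eapply Rle_lt_trans; [| exact Hrv].
    apply Rmult_le_compat_l; [lra | apply Rabs_sin_sub_le].
Qed.

Lemma Rabs_between_le x u z : Rmin x u <= z <= Rmax x u -> Rabs (z - x) <= Rabs (u - x).
Proof. intros H. apply Rabs_le_between_min_max. now rewrite Rmin_comm, Rmax_comm. Qed.

Lemma Rabs_increment_le (g dg : R -> R) L e x u :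
  (forall z, Rmin x u <= z <= Rmax x u -> derivable_pt_lim g z (dg z)) ->
  (forall z, Rmin x u <= z <= Rmax x u -> Rabs (dg z - L) <= e) ->
  Rabs (g u - g x - L * (u - x)) <= e * Rabs (u - x).
Proof.
  intros Hd Hb. destruct (MVT_gen g x u dg) as [c [Hc Hgc]].
  - intros z Hz. apply is_derive_Reals, Hd. lra.
  - intros z Hz. apply derivable_continuous_pt. exists (dg z). now apply Hd.
  - simpl in Hgc. rewrite Hgc.
    replace (dg c * (u - x) - L * (u - x)) with ((dg c - L) * (u - x)) by ring.
    rewrite Rabs_mult. apply Rmult_le_compat_r; [apply Rabs_pos | now apply Hb].
Qed.

Lemma differentiable_pt_lim_of_partials (g g1 g2 : R -> R -> R) x y :
  locally_2d (fun u v => derivable_pt_lim (fun z => g z v) u (g1 u v)) x y ->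
  continuity_2d_pt g1 x y ->
  derivable_pt_lim (fun z => g x z) y (g2 x y) ->
  differentiable_pt_lim g x y (g1 x y) (g2 x y).
Proof.
  intros [d0 H0] Hc Hd eps.
  assert (He2 : 0 < eps / 2) by (destruct eps; simpl; lra).
  destruct (Hc (mkposreal _ He2)) as [d1 H1]. simpl in H1.
  destruct (Hd (eps / 2) He2) as [d2 H2].
  assert (Hdd : 0 < Rmin d0 (Rmin d1 d2)) by (destruct d0, d1, d2; simpl; repeat apply Rmin_glb_lt; lra).
  exists (mkposreal _ Hdd). simpl. intros u v Hu Hv.
  pose proof (Rmin_l d0 (Rmin d1 d2)). pose proof (Rmin_r d0 (Rmin d1 d2)).
  pose proof (Rmin_l d1 d2). pose proof (Rmin_r d1 d2).
  assert (P1 : Rabs (g u v - g x v - g1 x y * (u - x)) <= eps / 2 * Rabs (u - x)).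
  { apply (Rabs_increment_le (fun z => g z v) (fun z => g1 z v)); intros z Hz;
      pose proof (Rabs_between_le x u z Hz).
    - apply H0; lra.
    - left. apply H1; lra. }
  assert (P2 : Rabs (g x v - g x y - g2 x y * (v - y)) <= eps / 2 * Rabs (v - y)).
  { destruct (Req_dec v y) as [->|Hvy].
    - rewrite !Rminus_eq_0, Rmult_0_r, Rminus_0_r, Rabs_R0. lra.
    - specialize (H2 (v - y) ltac:(lra) ltac:(lra)). replace (y + (v - y)) with v in H2 by ring.
      replace (g x v - g x y - g2 x y * (v - y)) with (((g x v - g x y) / (v - y) - g2 x y) * (v - y))
        by (field; lra).
      rewrite Rabs_mult. apply Rmult_le_compat_r; [apply Rabs_pos | lra]. }
  replace (g u v - g x y - (g1 x y * (u - x) + g2 x y * (v - y))) with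
    ((g u v - g x v - g1 x y * (u - x)) + (g x v - g x y - g2 x y * (v - y))) by ring.
  eapply Rle_trans; [apply Rabs_triang|].
  pose proof (Rmax_l (Rabs (u - x)) (Rabs (v - y))). pose proof (Rmax_r (Rabs (u - x)) (Rabs (v - y))).
  destruct eps as [e He]; simpl in *. nra.
Qed.

Lemma Derive_Derive_eq (f g : R -> R -> R) h u v (e : posreal) :
  (forall z, Rabs (z - u) < e -> derivable_pt_lim (fun t => f z t) v (g z v)) ->
  derivable_pt_lim (fun z => g z v) u h ->
  Derive (fun z => Derive (fun t => f z t) v) u = h /\ ex_derive (fun z => Derive (fun t => f z t) v) u.
Proof.
  intros Hf Hg.
  assert (L : locally u (fun z => g z v = Derive (fun t => f z t) v)).
  { apply locally_of_Rabs. exists e. intros z Hz. symmetry.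
    apply is_derive_unique, is_derive_Reals, Hf, Hz. }
  apply is_derive_Reals in Hg. split.
  - transitivity (Derive (fun z => g z v) u);
      [symmetry; now apply Derive_ext_loc | now apply is_derive_unique].
  - apply (ex_derive_ext_loc _ _ u L). eexists. exact Hg.
Qed.

Lemma Schwarz_derivable (f f1 f2 f12 f21 : R -> R -> R) x y :
  locally_2d (fun u v =>
    derivable_pt_lim (fun z => f z v) u (f1 u v) /\ derivable_pt_lim (fun z => f u z) v (f2 u v) /\
    derivable_pt_lim (fun z => f2 z v) u (f21 u v) /\ derivable_pt_lim (fun z => f1 u z) v (f12 u v)) x y ->
  continuity_2d_pt f21 x y -> continuity_2d_pt f12 x y ->
  f21 x y = f12 x y.
Proof.
  intros [d Hd] C21 C12.
  assert (Hd2 : 0 < d / 2) by (pose proof (cond_pos d); lra).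
  set (e := mkposreal _ Hd2).
  assert (Hin : forall a u z, Rabs (u - a) < e -> Rabs (z - u) <= e -> Rabs (z - a) < d).
  { simpl. intros a u z Hu Hz. pose proof (Rabs_triang (z - u) (u - a)).
    replace (z - u + (u - a)) with (z - a) in * by ring. lra. }
  assert (H0 : forall a, Rabs (a - a) <= e)
    by (intros; rewrite Rminus_eq_0, Rabs_R0; apply Rlt_le, cond_pos).
  assert (E : forall u v, Rabs (u - x) < e -> Rabs (v - y) < e ->
    (Derive (fun z => Derive (fun t => f z t) v) u = f21 u v /\
     ex_derive (fun z => Derive (fun t => f z t) v) u) /\
    (Derive (fun z => Derive (fun t => f t z) u) v = f12 u v /\
     ex_derive (fun z => Derive (fun t => f t z) u) v)).
  { intros u v Hu Hv. pose proof (Hd u v (Hin x u u Hu (H0 u)) (Hin y v v Hv (H0 v))) as (_ & _ & D21 & D12).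
    split.
    - apply (Derive_Derive_eq f f2 (f21 u v) u v e); [| exact D21].
      intros z Hz. exact (proj1 (proj2 (Hd z v (Hin x u z Hu (Rlt_le _ _ Hz)) (Hin y v v Hv (H0 v))))).
    - apply (Derive_Derive_eq (fun a b => f b a) (fun a b => f1 b a) (f12 u v) v u e); [| exact D12].
      intros z Hz. exact (proj1 (Hd u z (Hin x u u Hu (H0 u)) (Hin y v z Hv (Rlt_le _ _ Hz)))). }
  assert (Hxy : Rabs (x - x) < e /\ Rabs (y - y) < e)
    by (rewrite !Rminus_eq_0, Rabs_R0; split; apply cond_pos).
  destruct (E x y (proj1 Hxy) (proj2 Hxy)) as [[<- _] [<- _]].
  apply Schwarz.
  - exists e. intros u v Hu Hv.
    destruct (Hd u v (Hin x u u Hu (H0 u)) (Hin y v v Hv (H0 v))) as (D1 & D2 & _).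
    destruct (E u v Hu Hv) as [[_ X21] [_ X12]].
    apply is_derive_Reals in D1, D2. repeat split; auto; eexists; eauto.
  - apply continuity_2d_pt_ext_loc with f21; [| exact C21].
    exists e. intros u v Hu Hv. symmetry. exact (proj1 (proj1 (E u v Hu Hv))).
  - apply continuity_2d_pt_ext_loc with f12; [| exact C12].
    exists e. intros u v Hu Hv. symmetry. exact (proj1 (proj2 (E u v Hu Hv))).
Qed.

Section SmoothOnOpen.
Variable O : R -> R -> R -> Prop.
Hypothesis hO : open3 O.

Lemma smooth_on_Schwarz_01 f s x y : smooth_on O f -> O s x y ->
  Dpart 0 (Dpart 1 f) s x y = Dpart 1 (Dpart 0 f) s x y.
Proof.
  intros Hf H. destruct (hO s x y H) as [d [Hd Hbox]].
  apply (Schwarz_derivable (fun a b => f a b y) (fun a b => Dpart 0 f a b y) (fun a b => Dpart 1 f a b y)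
    (fun a b => Dpart 1 (Dpart 0 f) a b y) (fun a b => Dpart 0 (Dpart 1 f) a b y)).
  - exists (mkposreal d Hd). simpl. intros u v Hu Hv.
    assert (Huv : O u v y) by (apply Hbox; auto; rewrite Rminus_eq_0, Rabs_R0; lra).
    repeat split; [apply (smooth_on_has_partial O f 0) | apply (smooth_on_has_partial O f 1)
      | apply (smooth_on_has_partial O (Dpart 1 f) 0) | apply (smooth_on_has_partial O (Dpart 0 f) 1)];
      auto using smooth_on_Dpart.
  - apply continuous3_at_slice_y, (smooth_on_continuous3 O); auto using smooth_on_Dpart.
  - apply continuous3_at_slice_y, (smooth_on_continuous3 O); auto using smooth_on_Dpart.
Qed.

Lemma smooth_on_Schwarz_02 f s x y : smooth_on O f -> O s x y ->
  Dpart 0 (Dpart 2 f) s x y = Dpart 2 (Dpart 0 f) s x y.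
Proof.
  intros Hf H. destruct (hO s x y H) as [d [Hd Hbox]].
  apply (Schwarz_derivable (fun a b => f a x b) (fun a b => Dpart 0 f a x b) (fun a b => Dpart 2 f a x b)
    (fun a b => Dpart 2 (Dpart 0 f) a x b) (fun a b => Dpart 0 (Dpart 2 f) a x b)).
  - exists (mkposreal d Hd). simpl. intros u v Hu Hv.
    assert (Huv : O u x v) by (apply Hbox; auto; rewrite Rminus_eq_0, Rabs_R0; lra).
    repeat split; [apply (smooth_on_has_partial O f 0) | apply (smooth_on_has_partial O f 2)
      | apply (smooth_on_has_partial O (Dpart 2 f) 0) | apply (smooth_on_has_partial O (Dpart 0 f) 2)];
      auto using smooth_on_Dpart.
  - apply continuous3_at_slice_x, (smooth_on_continuous3 O); auto using smooth_on_Dpart.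
  - apply continuous3_at_slice_x, (smooth_on_continuous3 O); auto using smooth_on_Dpart.
Qed.

Lemma derivable_along_circle (F F1 F2 : F3) r s t : O s (r * cos t) (r * sin t) ->
  (forall x y, O s x y -> has_partial 1 F s x y (F1 s x y)) ->
  continuous3_at F1 s (r * cos t) (r * sin t) ->
  has_partial 2 F s (r * cos t) (r * sin t) (F2 s (r * cos t) (r * sin t)) ->
  derivable_pt_lim (fun t => F s (r * cos t) (r * sin t)) t
    (F1 s (r * cos t) (r * sin t) * (- (r * sin t)) + F2 s (r * cos t) (r * sin t) * (r * cos t)).
Proof.
  intros H H1 C1 H2.
  apply (derivable_pt_lim_comp_2d (F s) (fun t => r * cos t) (fun t => r * sin t) t).
  - apply (differentiable_pt_lim_of_partials (F s) (F1 s) (F2 s));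
      [| now apply continuous3_at_slice_s | exact H2].
    destruct (hO _ _ _ H) as [d [Hd Hd']]. exists (mkposreal d Hd). simpl. intros u v Hu Hv.
    apply H1, Hd'; auto. rewrite Rminus_eq_0, Rabs_R0. lra.
  - apply is_derive_Reals. auto_derive; auto. ring.
  - apply is_derive_Reals. auto_derive; auto. ring.
Qed.

End SmoothOnOpen.

(** * Green's theorem on a disk *)

Lemma circle_sq r t : (r * cos t) ^ 2 + (r * sin t) ^ 2 = r ^ 2.
Proof. pose proof (sin2_cos2 t). unfold Rsqr in *. nra. Qed.

Lemma chord_sq r x : 0 <= r -> - r <= x <= r -> x ^ 2 + (sqrt (r ^ 2 - x ^ 2)) ^ 2 = r ^ 2.
Proof.
  intros Hr Hx. rewrite <- Rsqr_pow2 with (x := sqrt _). rewrite Rsqr_sqrt; [ring | nra].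
Qed.

Lemma sqrt_chord_circle r t : 0 <= r * sin t -> sqrt (r ^ 2 - (r * cos t) ^ 2) = r * sin t.
Proof.
  intros H. replace (r ^ 2 - (r * cos t) ^ 2) with ((r * sin t) ^ 2)
    by (rewrite <- (circle_sq r t); ring).
  now apply sqrt_pow2.
Qed.

Lemma sqrt_chord_circle_neg r t : r * sin t <= 0 -> - sqrt (r ^ 2 - (r * cos t) ^ 2) = r * sin t.
Proof.
  intros H. replace (r ^ 2 - (r * cos t) ^ 2) with ((- (r * sin t)) ^ 2)
    by (rewrite <- (circle_sq r t); ring).
  rewrite sqrt_pow2; lra.
Qed.

Lemma pow2_le_of_Rabs_le u h : Rabs u <= h -> u ^ 2 <= h ^ 2.
Proof. intros H. rewrite <- (pow2_abs u). apply pow_incr. split; [apply Rabs_pos | exact H]. Qed.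

Lemma pow2_lt_of_lt r R' : 0 <= r < R' -> r ^ 2 < R' ^ 2.
Proof. intros. nra. Qed.

Lemma Rabs_le_of_between a b h u : Rabs a <= h -> Rabs b <= h -> Rmin a b <= u <= Rmax a b ->
  Rabs u <= h.
Proof.
  intros Ha Hb Hu. apply Rabs_le_between in Ha, Hb. apply Rabs_le.
  unfold Rmin, Rmax in Hu. destruct (Rle_dec a b); lra.
Qed.

Lemma disk_box_nbhd x0 y0 Rad : x0 ^ 2 + y0 ^ 2 < Rad ^ 2 ->
  exists d, 0 < d <= 1 /\
    forall x y, Rabs x <= Rabs x0 + d -> Rabs y <= Rabs y0 + d -> x ^ 2 + y ^ 2 < Rad ^ 2.
Proof.
  intros H. set (gap := Rad ^ 2 - (x0 ^ 2 + y0 ^ 2)).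
  set (K := 2 * Rabs x0 + 2 * Rabs y0 + 3).
  pose proof (Rabs_pos x0). pose proof (Rabs_pos y0).
  assert (HK : 0 < K) by (unfold K; lra).
  assert (Hg : 0 < gap / (2 * K)) by (unfold gap; apply Rdiv_lt_0_compat; lra).
  exists (Rmin 1 (gap / (2 * K))). split; [split; [apply Rmin_glb_lt; lra | apply Rmin_l]|].
  intros x y Hx Hy. set (d := Rmin 1 (gap / (2 * K))) in *.
  assert (Hd1 : d <= 1) by apply Rmin_l.
  assert (Hd0 : 0 < d) by (apply Rmin_glb_lt; lra).
  assert (HdK : d * K <= gap / 2).
  { apply Rle_trans with (gap / (2 * K) * K); [apply Rmult_le_compat_r; [lra | apply Rmin_r]|].
    right. field. lra. }
  assert (Hx2 : x ^ 2 <= (Rabs x0 + d) ^ 2) by (apply pow2_le_of_Rabs_le; assumption).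
  assert (Hy2 : y ^ 2 <= (Rabs y0 + d) ^ 2) by (apply pow2_le_of_Rabs_le; assumption).
  pose proof (pow2_abs x0). pose proof (pow2_abs y0).
  assert ((Rabs x0 + d) ^ 2 + (Rabs y0 + d) ^ 2 <= x0 ^ 2 + y0 ^ 2 + d * K) by (unfold K; nra).
  unfold gap in *. lra.
Qed.

Lemma disk_box_nbhd_circle r Rad t1 y1 : 0 < r -> (r * cos t1) ^ 2 + y1 ^ 2 < Rad ^ 2 ->
  exists d, 0 < d /\ forall t u, Rabs (t - t1) < d -> Rabs u <= Rabs y1 + d ->
    (r * cos t) ^ 2 + u ^ 2 < Rad ^ 2.
Proof.
  intros Hr H. destruct (disk_box_nbhd _ _ _ H) as [d0 [Hd0 Hb]].
  exists (Rmin d0 (d0 / r)). split; [apply Rmin_glb_lt; [lra | apply Rdiv_lt_0_compat; lra]|].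
  intros t u Ht Hu. apply Hb.
  - apply Rabs_le_shift.
    replace (r * cos t - r * cos t1) with (r * (cos t - cos t1)) by ring.
    rewrite Rabs_mult, (Rabs_right r) by lra.
    apply Rle_trans with (r * Rabs (t - t1)); [apply Rmult_le_compat_l; [lra | apply Rabs_cos_sub_le]|].
    apply Rle_trans with (r * (d0 / r)); [| right; field; lra].
    apply Rmult_le_compat_l; [lra|]. left. eapply Rlt_le_trans; [exact Ht | apply Rmin_r].
  - pose proof (Rmin_l d0 (d0 / r)). lra.
Qed.

Lemma Rabs_le_of_between_widened b e u : 0 <= e -> Rmin 0 (b - e) <= u <= Rmax 0 (b + e) ->
  Rabs u <= Rabs b + e.
Proof.
  intros He Hu. apply Rabs_le. unfold Rmin, Rmax in Hu.
  unfold Rabs; destruct (Rcase_abs b); repeat destruct Rle_dec; lra.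
Qed.

Definition prim_snd (g : R -> R -> R) x y := RInt (g x) 0 y.

Lemma Rabs_prim_snd_sub_le g x x0 y e : ex_RInt (g x) 0 y -> ex_RInt (g x0) 0 y ->
  (forall u, Rmin 0 y <= u <= Rmax 0 y -> Rabs (g x u - g x0 u) <= e) ->
  Rabs (prim_snd g x y - prim_snd g x0 y) <= Rabs y * e.
Proof.
  intros E1 E2 H. unfold prim_snd. rewrite <- (RInt_minusR (g x) (g x0) 0 y E1 E2).
  rewrite <- (Rminus_0_r y) at 2. apply Rabs_RInt_le_const; [now apply ex_RInt_minusR | exact H].
Qed.

Lemma continuous_prim_snd g x y0 m : 0 < m -> (forall y, Rabs (y - y0) < m -> ex_RInt (g x) 0 y) ->
  continuous (prim_snd g x) y0.
Proof.
  intros Hm H. apply (continuous_RInt_1 (g x) 0 y0 (prim_snd g x)).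
  apply locally_of_Rabs. exists (mkposreal m Hm). intros z Hz.
  apply (RInt_correct (V := R_CompleteNormedModule)). now apply H.
Qed.

Lemma continuity_2d_pt_prim_snd g x0 y0 d0 M : 0 < d0 -> Rabs y0 < M ->
  (forall x u, Rabs (x - x0) <= d0 -> Rabs u <= M -> continuity_2d_pt g x u) ->
  continuity_2d_pt (prim_snd g) x0 y0.
Proof.
  intros Hd0 HyM Hg eps.
  set (m := M - Rabs y0).
  assert (Hm : 0 < m) by (unfold m; lra).
  assert (HM : 0 < M) by (pose proof (Rabs_pos y0); lra).
  assert (Hbet : forall y, Rabs (y - y0) < m -> forall u, Rmin 0 y <= u <= Rmax 0 y -> Rabs u <= M).
  { intros y Hy u Hu. apply (Rabs_le_of_between 0 y); [rewrite Rabs_R0; lra | | exact Hu].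
    apply Rlt_le in Hy. apply Rabs_le_shift in Hy. unfold m in Hy. lra. }
  assert (Hx0 : Rabs (x0 - x0) <= d0) by (rewrite Rminus_eq_0, Rabs_R0; lra).
  assert (Eslice : forall x y, Rabs (x - x0) <= d0 -> Rabs (y - y0) < m -> ex_RInt (g x) 0 y).
  { intros x y Hx Hy. apply ex_RInt_slice. intros u Hu. apply Hg; [exact Hx | now apply (Hbet y)]. }
  assert (Hcy : continuous (prim_snd g x0) y0) by (apply (continuous_prim_snd _ _ _ m Hm); auto).
  assert (Heps2 : 0 < eps / 2) by (destruct eps; simpl; lra).
  destruct (continuous_Rabs_eps _ _ Hcy (mkposreal _ Heps2)) as [d2 Hd2]. simpl in Hd2.
  assert (Heps1 : 0 < eps / (2 * (M + 1))) by (destruct eps; simpl; apply Rdiv_lt_0_compat; lra).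
  destruct (uniform_continuity_2d_1d' g (- M) M x0) with (eps := mkposreal _ Heps1) as [d1 Hd1].
  { intros u Hu. apply Hg; [exact Hx0 | apply Rabs_le; lra]. }
  simpl in Hd1.
  assert (Hd : 0 < Rmin (Rmin d0 m) (Rmin d1 d2)).
  { destruct d1, d2; simpl. repeat apply Rmin_glb_lt; lra. }
  exists (mkposreal _ Hd). simpl. intros x y Hx Hy.
  pose proof (Rmin_l (Rmin d0 m) (Rmin d1 d2)). pose proof (Rmin_r (Rmin d0 m) (Rmin d1 d2)).
  pose proof (Rmin_l d0 m). pose proof (Rmin_r d0 m). pose proof (Rmin_l d1 d2). pose proof (Rmin_r d1 d2).
  assert (HyM' : Rabs y <= M) by (apply (Hbet y); [lra | unfold Rmin, Rmax; destruct Rle_dec; lra]).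
  assert (A : Rabs (prim_snd g x y - prim_snd g x0 y) <= Rabs y * (eps / (2 * (M + 1)))).
  { apply Rabs_prim_snd_sub_le; [apply Eslice; lra .. |].
    intros u Hu. left. pose proof (Hbet y ltac:(lra) u Hu) as Hu'. apply Rabs_le_between in Hu'.
    assert (Hx' : Rabs (x - x0) <= d1) by lra. apply Rabs_le_between in Hx'.
    apply (Hd1 u x0 u x); try lra. rewrite Rminus_eq_0, Rabs_R0. apply cond_pos. }
  assert (B : Rabs (prim_snd g x0 y - prim_snd g x0 y0) < eps / 2) by (apply Hd2; lra).
  assert (C : Rabs y * (eps / (2 * (M + 1))) < eps / 2).
  { apply Rle_lt_trans with (M * (eps / (2 * (M + 1)))); [apply Rmult_le_compat_r; lra|].
    apply Rmult_lt_reg_r with (2 * (M + 1)); [lra|].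
    field_simplify; [| lra]. destruct eps; simpl in *. nra. }
  replace (prim_snd g x y - prim_snd g x0 y0)
    with ((prim_snd g x y - prim_snd g x0 y) + (prim_snd g x0 y - prim_snd g x0 y0)) by ring.
  eapply Rle_lt_trans; [apply Rabs_triang | lra].
Qed.

Section ChordsOfDisk.
Variables (F : R -> R -> R) (r : R).
Hypothesis Hr : 0 <= r.
Hypothesis HF : forall x y, x ^ 2 + y ^ 2 <= r ^ 2 -> continuity_2d_pt F x y.

Lemma continuous_circle_integrand t : continuous (fun t => r * sin t * F (r * cos t) (r * sin t)) t.
Proof.
  apply continuous_multR; [apply continuous_mult_sin|].
  apply continuous_along_circle, HF. rewrite circle_sq. lra.
Qed.

Lemma continuous_chord_upper x : - r <= x <= r -> continuous (fun x => F x (sqrt (r ^ 2 - x ^ 2))) x.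
Proof.
  intros Hx. apply (continuous_comp_2d F (fun t => t) (fun x => sqrt (r ^ 2 - x ^ 2)) x);
    [| apply continuous_idR | apply continuous_half_chord].
  apply HF. rewrite chord_sq by lra. lra.
Qed.

Lemma continuous_chord_lower x : - r <= x <= r -> continuous (fun x => F x (- sqrt (r ^ 2 - x ^ 2))) x.
Proof.
  intros Hx. apply (continuous_comp_2d F (fun t => t) (fun x => - sqrt (r ^ 2 - x ^ 2)) x);
    [| apply continuous_idR | apply continuous_oppR, continuous_half_chord].
  apply HF. replace ((- sqrt (r ^ 2 - x ^ 2)) ^ 2) with ((sqrt (r ^ 2 - x ^ 2)) ^ 2) by ring.
  rewrite chord_sq by lra. lra.
Qed.

Lemma RInt_chord_upper :
  RInt (fun x => F x (sqrt (r ^ 2 - x ^ 2))) (- r) r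
  = RInt (fun t => r * sin t * F (r * cos t) (r * sin t)) 0 PI.
Proof.
  pose proof PI_RGT_0.
  assert (EG : ex_RInt (fun t => r * sin t * F (r * cos t) (r * sin t)) 0 PI)
    by (apply ex_RInt_continuousR; intros; apply continuous_circle_integrand).
  pose proof (RInt_comp (V := R_CompleteNormedModule) (fun x => F x (sqrt (r ^ 2 - x ^ 2)))
    (fun t => r * cos t) (fun t => - (r * sin t)) PI 0) as EQ.
  cbv beta in EQ. rewrite cos_PI, cos_0, Rmult_1_r in EQ. replace (r * -1) with (- r) in EQ by ring.
  rewrite <- EQ.
  - apply ex_RInt_swap in EG.
    rewrite (RInt_swapR _ PI 0 EG), <- RInt_oppR by exact EG.
    apply RInt_ext. intros t Ht. rewrite Rmin_right, Rmax_left in Ht by lra.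
    rewrite sqrt_chord_circle by (apply Rmult_le_pos; [lra | apply sin_ge_0; lra]).
    unfold scal; simpl; unfold mult; simpl. ring.
  - intros t _. apply continuous_chord_upper. pose proof (COS_bound t). split; nra.
  - intros t _. split; [auto_derive; auto; ring | apply continuous_oppR, continuous_mult_sin].
Qed.

Lemma RInt_chord_lower :
  RInt (fun x => F x (- sqrt (r ^ 2 - x ^ 2))) (- r) r
  = - RInt (fun t => r * sin t * F (r * cos t) (r * sin t)) PI (2 * PI).
Proof.
  pose proof PI_RGT_0.
  assert (EG : ex_RInt (fun t => r * sin t * F (r * cos t) (r * sin t)) PI (2 * PI))
    by (apply ex_RInt_continuousR; intros; apply continuous_circle_integrand).
  pose proof (RInt_comp (V := R_CompleteNormedModule) (fun x => F x (- sqrt (r ^ 2 - x ^ 2)))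
    (fun t => r * cos t) (fun t => - (r * sin t)) PI (2 * PI)) as EQ.
  cbv beta in EQ. rewrite cos_PI, cos_2PI, Rmult_1_r in EQ. replace (r * -1) with (- r) in EQ by ring.
  rewrite <- EQ.
  - rewrite <- RInt_oppR by exact EG.
    apply RInt_ext. intros t Ht. rewrite Rmin_left, Rmax_right in Ht by lra.
    assert (sin t <= 0) by (apply sin_le_0; lra).
    rewrite sqrt_chord_circle_neg by nra.
    unfold scal; simpl; unfold mult; simpl. ring.
  - intros t _. apply continuous_chord_lower. pose proof (COS_bound t). split; nra.
  - intros t _. split; [auto_derive; auto; ring | apply continuous_oppR, continuous_mult_sin].
Qed.

End ChordsOfDisk.

Definition green_hyp (V1 V2 D1V2 D2V1 : R -> R -> R) Rad : Prop :=
  forall x y, x ^ 2 + y ^ 2 < Rad ^ 2 ->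
    continuity_2d_pt V1 x y /\ continuity_2d_pt V2 x y /\ continuity_2d_pt D1V2 x y /\
    continuity_2d_pt D2V1 x y /\ derivable_pt_lim (fun u => V2 u y) x (D1V2 x y) /\
    derivable_pt_lim (fun u => V1 x u) y (D2V1 x y).

(* Its [y]-derivative is the curl [D1V2 - D2V1], so the inner integrals of the disk integral of
   the curl are its increments along vertical chords. *)
Definition curl_potential (V1 D1V2 : R -> R -> R) x y := prim_snd D1V2 x y - V1 x y.

Section Green.
Variables (V1 V2 D1V2 D2V1 : R -> R -> R) (Rad r : R).
Hypothesis HG : green_hyp V1 V2 D1V2 D2V1 Rad.
Hypothesis Hr : 0 < r < Rad.

Lemma closed_disk_sub x y : x ^ 2 + y ^ 2 <= r ^ 2 -> x ^ 2 + y ^ 2 < Rad ^ 2.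
Proof. pose proof (pow2_lt_of_lt r Rad ltac:(lra)). lra. Qed.

Lemma continuity_2d_pt_prim_snd_disk x y : x ^ 2 + y ^ 2 < Rad ^ 2 ->
  continuity_2d_pt (prim_snd D1V2) x y.
Proof.
  intros H. destruct (disk_box_nbhd x y Rad H) as [d0 [Hd0 Hbox]].
  apply (continuity_2d_pt_prim_snd D1V2 x y d0 (Rabs y + d0)); [lra | lra |].
  intros a u Ha Hu. apply HG, Hbox; [now apply Rabs_le_shift | exact Hu].
Qed.

Lemma continuity_2d_pt_curl_potential x y : x ^ 2 + y ^ 2 < Rad ^ 2 ->
  continuity_2d_pt (curl_potential V1 D1V2) x y.
Proof.
  intros H. apply continuity_2d_pt_minus; [now apply continuity_2d_pt_prim_snd_disk | apply (HG x y H)].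
Qed.

Lemma continuity_2d_pt_curl_potential_closed x y : x ^ 2 + y ^ 2 <= r ^ 2 ->
  continuity_2d_pt (curl_potential V1 D1V2) x y.
Proof. intros; now apply continuity_2d_pt_curl_potential, closed_disk_sub. Qed.

Lemma RInt_vertical_chord x : - r <= x <= r ->
  RInt (fun y => D1V2 x y - D2V1 x y) (- sqrt (r ^ 2 - x ^ 2)) (sqrt (r ^ 2 - x ^ 2))
  = curl_potential V1 D1V2 x (sqrt (r ^ 2 - x ^ 2))
    - curl_potential V1 D1V2 x (- sqrt (r ^ 2 - x ^ 2)).
Proof.
  intros Hx. set (h := sqrt (r ^ 2 - x ^ 2)).
  assert (Hh : 0 <= h) by apply sqrt_pos.
  assert (Hin : forall a b u, Rabs a <= h -> Rabs b <= h -> Rmin a b <= u <= Rmax a b ->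
    x ^ 2 + u ^ 2 < Rad ^ 2).
  { intros a b u Ha Hb Hu. apply closed_disk_sub.
    pose proof (pow2_le_of_Rabs_le u h (Rabs_le_of_between a b h u Ha Hb Hu)).
    pose proof (chord_sq r x ltac:(lra) Hx). fold h in H0. lra. }
  assert (Hh' : Rabs h <= h /\ Rabs (- h) <= h /\ Rabs 0 <= h)
    by (rewrite Rabs_Ropp, Rabs_R0, Rabs_pos_eq; lra).
  assert (EX : forall a b, Rabs a <= h -> Rabs b <= h -> ex_RInt (D1V2 x) a b /\ ex_RInt (D2V1 x) a b).
  { intros a b Ha Hb. split; apply ex_RInt_slice; intros u Hu; apply (HG x u (Hin a b u Ha Hb Hu)). }
  destruct (EX (- h) h) as [E1 E2]; try tauto.
  destruct (EX 0 (- h)) as [E3 _]; try tauto.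
  rewrite (RInt_minusR (D1V2 x) (D2V1 x)) by assumption.
  assert (I1 : RInt (D1V2 x) (- h) h = prim_snd D1V2 x h - prim_snd D1V2 x (- h)).
  { unfold prim_snd. rewrite <- (RInt_ChaslesR (D1V2 x) 0 (- h) h E3 E1). lra. }
  assert (I2 : RInt (D2V1 x) (- h) h = V1 x h - V1 x (- h)).
  { apply is_RInt_unique, (is_RInt_derive (V := R_CompleteNormedModule) (V1 x) (D2V1 x));
      intros u Hu; pose proof (Hin (- h) h u ltac:(tauto) ltac:(tauto) Hu) as Hxu.
    - apply is_derive_Reals, (HG x u Hxu).
    - apply (continuous_comp_2d D2V1 (fun _ => x) (fun t => t) u);
        [apply (HG x u Hxu) | apply continuous_constR | apply continuous_idR]. }
  rewrite I1, I2. unfold curl_potential. lra.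
Qed.

Lemma is_RInt_disk_curl_potential :
  is_RInt (fun x => RInt (fun y => D1V2 x y - D2V1 x y) (- sqrt (r ^ 2 - x ^ 2)) (sqrt (r ^ 2 - x ^ 2)))
    (- r) r (RInt (fun t => r * sin t * curl_potential V1 D1V2 (r * cos t) (r * sin t)) 0 (2 * PI)).
Proof.
  set (Phi := curl_potential V1 D1V2).
  pose proof continuity_2d_pt_curl_potential_closed as HPhi.
  assert (Hr0 : 0 <= r) by lra.
  assert (EU : ex_RInt (fun x => Phi x (sqrt (r ^ 2 - x ^ 2))) (- r) r).
  { apply ex_RInt_continuousR. intros z Hz. rewrite Rmin_left, Rmax_right in Hz by lra.
    now apply continuous_chord_upper. }
  assert (EL : ex_RInt (fun x => Phi x (- sqrt (r ^ 2 - x ^ 2))) (- r) r).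
  { apply ex_RInt_continuousR. intros z Hz. rewrite Rmin_left, Rmax_right in Hz by lra.
    now apply continuous_chord_lower. }
  set (G := fun t => r * sin t * Phi (r * cos t) (r * sin t)).
  assert (EG : forall a b, ex_RInt G a b)
    by (intros; apply ex_RInt_continuousR; intros; now apply continuous_circle_integrand).
  apply (is_RInt_ext (V := R_CompleteNormedModule)
    (fun x => Phi x (sqrt (r ^ 2 - x ^ 2)) - Phi x (- sqrt (r ^ 2 - x ^ 2)))).
  { intros x Hx. rewrite Rmin_left, Rmax_right in Hx by lra.
    symmetry. apply RInt_vertical_chord. lra. }
  replace (RInt G 0 (2 * PI)) with (RInt (fun x => Phi x (sqrt (r ^ 2 - x ^ 2))) (- r) r
                                   - RInt (fun x => Phi x (- sqrt (r ^ 2 - x ^ 2))) (- r) r).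
  - rewrite <- RInt_minusR by assumption.
    apply (RInt_correct (V := R_CompleteNormedModule)). now apply ex_RInt_minusR.
  - rewrite RInt_chord_upper, RInt_chord_lower by assumption. fold G.
    rewrite <- (RInt_ChaslesR G 0 PI (2 * PI)) by apply EG. lra.
Qed.

Lemma is_derive_along_cos u t : (r * cos t) ^ 2 + u ^ 2 < Rad ^ 2 ->
  is_derive (fun z => V2 (r * cos z) u) t (D1V2 (r * cos t) u * (- (r * sin t))).
Proof.
  intros H. apply is_derive_Reals.
  assert (H1 : derivable_pt_lim (fun z => r * cos z) t (- (r * sin t)))
    by (apply is_derive_Reals; auto_derive; auto; ring).
  exact (derivable_pt_lim_comp (fun z => r * cos z) (fun x => V2 x u) t _ _ H1
    (proj1 (proj2 (proj2 (proj2 (proj2 (HG (r * cos t) u H))))))).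
Qed.

Lemma continuity_2d_pt_Derive_along_cos t u : (r * cos t) ^ 2 + u ^ 2 < Rad ^ 2 ->
  continuity_2d_pt (fun t u => Derive (fun z => V2 (r * cos z) u) t) t u.
Proof.
  intros H.
  apply continuity_2d_pt_ext_loc with (fun t u => D1V2 (r * cos t) u * (- (r * sin t))).
  - destruct (disk_box_nbhd_circle r Rad t u (proj1 Hr) H) as [d [Hd Hb]].
    exists (mkposreal d Hd). simpl. intros t' u' H1 H2. symmetry.
    apply is_derive_unique, is_derive_along_cos, Hb; [exact H1 |].
    apply Rabs_le_shift. lra.
  - apply continuity_2d_pt_mult.
    + apply (continuity_2d_pt_comp_fst D1V2 (fun t => r * cos t));
        [apply (HG _ _ H) | apply continuous_mult_cos].
    + apply continuity_2d_pt_fst, continuous_oppR, continuous_mult_sin.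
Qed.

Definition boundary_prim t := RInt (fun u => V2 (r * cos t) u) 0 (r * sin t).

Definition boundary_prim_deriv t :=
  - (r * sin t) * prim_snd D1V2 (r * cos t) (r * sin t) + V2 (r * cos t) (r * sin t) * (r * cos t).

Lemma is_derive_boundary_prim t0 : is_derive boundary_prim t0 (boundary_prim_deriv t0).
Proof.
  set (f := fun t u => V2 (r * cos t) u). set (b := r * sin t0).
  destruct (disk_box_nbhd_circle r Rad t0 b (proj1 Hr)) as [d [Hd Hb]].
  { unfold b. rewrite circle_sq. apply pow2_lt_of_lt. lra. }
  assert (Hd2 : 0 < d / 2) by lra.
  assert (Ht0 : Rabs (t0 - t0) < d) by (rewrite Rminus_eq_0, Rabs_R0; lra).
  assert (Hseg : forall u, Rmin 0 b <= u <= Rmax 0 b -> Rabs u <= Rabs b + d).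
  { intros u Hu. apply (Rabs_le_of_between 0 b); [rewrite Rabs_R0 | | exact Hu];
      pose proof (Rabs_pos b); lra. }
  assert (Eslice : forall y a c, Rabs (y - t0) < d ->
      (forall u, Rmin a c <= u <= Rmax a c -> Rabs u <= Rabs b + d) -> ex_RInt (f y) a c).
  { intros y a c Hy Hac. apply (ex_RInt_slice (fun a b => V2 (r * cos a) b)). intros u Hu.
    apply (continuity_2d_pt_comp_fst V2 (fun t => r * cos t));
      [apply HG, Hb; auto | apply continuous_mult_cos]. }
  unfold boundary_prim. eapply is_derive_ext; [intros z; reflexivity|].
  replace (boundary_prim_deriv t0) with
    (RInt (fun u => Derive (fun z => f z u) t0) 0 b + f t0 b * (r * cos t0)).
  - apply (is_derive_RInt_param_bound_comp_aux3 f 0 (fun t => r * sin t) t0 (r * cos t0)).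
    + apply locally_of_Rabs. exists (mkposreal d Hd). intros y Hy. now apply Eslice.
    + exists (mkposreal _ Hd2). apply locally_of_Rabs. exists (mkposreal d Hd). intros y Hy.
      apply Eslice; [exact Hy|]. intros u Hu. apply Rabs_le_shift.
      assert (Rabs (u - b) <= d / 2); [| lra]. apply Rabs_le. simpl in Hu. fold b in Hu.
      unfold Rmin, Rmax in Hu. destruct Rle_dec; lra.
    + auto_derive; auto. ring.
    + exists (mkposreal _ Hd2). apply locally_of_Rabs. exists (mkposreal d Hd). intros y Hy u Hu.
      eexists. apply is_derive_along_cos, Hb; [exact Hy|].
      pose proof (Rabs_le_of_between_widened b (d / 2) u ltac:(lra) Hu). lra.
    + intros u Hu. apply continuity_2d_pt_Derive_along_cos, Hb; auto.
    + exists (mkposreal d Hd). intros t' u' H1 H2. apply continuity_2d_pt_Derive_along_cos, Hb; auto.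
      apply Rabs_le_shift. simpl in H2. fold b in H2. lra.
    + apply continuity_pt_filterlim.
      apply (continuous_comp_2d V2 (fun _ => r * cos t0) (fun u => u) b);
        [| apply continuous_constR | apply continuous_idR].
      apply HG, Hb; [exact Ht0 | lra].
  - unfold boundary_prim_deriv, prim_snd. fold b.
    rewrite <- RInt_scalR by (apply (ex_RInt_slice D1V2); intros u Hu; apply HG, Hb; auto).
    f_equal. apply RInt_ext. intros u Hu.
    apply is_derive_unique.
    replace (- b * D1V2 (r * cos t0) u) with (D1V2 (r * cos t0) u * (- (r * sin t0))) by (unfold b; ring).
    apply is_derive_along_cos, Hb; [exact Ht0 | apply Hseg; lra].
Qed.

Lemma is_RInt_disk_curl :
  is_RInt (fun x => RInt (fun y => D1V2 x y - D2V1 x y) (- sqrt (r ^ 2 - x ^ 2)) (sqrt (r ^ 2 - x ^ 2)))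
    (- r) r
    (RInt (fun t => (- V1 (r * cos t) (r * sin t) * sin t + V2 (r * cos t) (r * sin t) * cos t) * r)
       0 (2 * PI)).
Proof.
  assert (Hc : forall t, (r * cos t) ^ 2 + (r * sin t) ^ 2 < Rad ^ 2)
    by (intros; rewrite circle_sq; apply pow2_lt_of_lt; lra).
  assert (Cd : forall t, continuous boundary_prim_deriv t).
  { intros t. unfold boundary_prim_deriv. apply continuous_plusR; apply continuous_multR.
    - apply continuous_oppR, continuous_mult_sin.
    - apply continuous_along_circle, continuity_2d_pt_prim_snd_disk, Hc.
    - apply continuous_along_circle, (HG _ _ (Hc t)).
    - apply continuous_mult_cos. }
  assert (I0 : RInt boundary_prim_deriv 0 (2 * PI) = 0).
  { rewrite (is_RInt_unique _ _ _ _ (is_RInt_derive (V := R_CompleteNormedModule)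
      boundary_prim boundary_prim_deriv 0 (2 * PI)
      (fun t _ => is_derive_boundary_prim t) (fun t _ => Cd t))).
    unfold boundary_prim. rewrite sin_2PI, sin_0, Rmult_0_r, !RInt_point.
    unfold minus, plus, opp, zero; simpl. ring. }
  set (G := fun t => r * sin t * curl_potential V1 D1V2 (r * cos t) (r * sin t)).
  set (W := fun t => (- V1 (r * cos t) (r * sin t) * sin t + V2 (r * cos t) (r * sin t) * cos t) * r).
  replace (RInt W 0 (2 * PI)) with (RInt G 0 (2 * PI)); [exact is_RInt_disk_curl_potential|].
  rewrite (RInt_ext W (fun t => G t + boundary_prim_deriv t)).
  - assert (EG : ex_RInt G 0 (2 * PI)).
    { apply ex_RInt_continuousR. intros z _.
      apply (continuous_circle_integrand (curl_potential V1 D1V2) r),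
        continuity_2d_pt_curl_potential_closed. }
    rewrite RInt_plusR; [rewrite I0; lra | exact EG | apply ex_RInt_continuousR; intros; apply Cd].
  - intros t _. unfold W, G, boundary_prim_deriv, curl_potential. lra.
Qed.

End Green.

(** * Integrating a derivative bound over a closed interval *)

Definition continuous_within (a b : R) (f : R -> R) : Prop :=
  forall c, a <= c <= b -> forall e, 0 < e -> exists d, 0 < d /\
    forall u, a <= u <= b -> Rabs (u - c) < d -> Rabs (f u - f c) < e.

Lemma continuous_within_RInt_param (f : R -> R -> R) a b lo hi : a <= b ->
  (forall c th, lo <= c <= hi -> a <= th <= b -> continuity_2d_pt f c th) ->
  (forall u, lo <= u <= hi -> ex_RInt (f u) a b) ->
  continuous_within lo hi (fun u => RInt (f u) a b).
Proof.
  intros Hab Hc Hex c Hcl eps He.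
  assert (He' : 0 < eps / (b - a + 1)) by (apply Rdiv_lt_0_compat; lra).
  destruct (uniform_continuity_2d_1d' f a b c (fun th => Hc c th Hcl) (mkposreal _ He')) as [d Hd].
  simpl in Hd.
  exists d. split; [apply cond_pos|]. intros u Hu Hud.
  rewrite <- RInt_minusR by auto.
  eapply Rle_lt_trans.
  - apply (Rabs_RInt_le_const _ a b (eps / (b - a + 1))); [apply ex_RInt_minusR; auto|].
    intros th Hth. rewrite Rmin_left, Rmax_right in Hth by lra. left.
    pose proof (cond_pos d). apply Rlt_le, Rabs_le_between in Hud.
    apply (Hd th c th u); auto; try lra. rewrite Rminus_eq_0, Rabs_R0. apply cond_pos.
  - rewrite Rabs_pos_eq by lra.
    apply Rlt_le_trans with ((b - a + 1) * (eps / (b - a + 1))); [apply Rmult_lt_compat_r; lra|].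
    right. field. lra.
Qed.

(* Clamping to [a, b] turns continuity within [a, b] into continuity on all of [R]. *)
Definition clamp a b x := Rmax a (Rmin b x).

Lemma clamp_between a b x : a <= b -> a <= clamp a b x <= b.
Proof. intros H. unfold clamp, Rmax, Rmin. repeat destruct Rle_dec; lra. Qed.

Lemma clamp_id a b x : a <= x <= b -> clamp a b x = x.
Proof. intros H. unfold clamp, Rmax, Rmin. repeat destruct Rle_dec; lra. Qed.

Lemma Rabs_clamp_sub_le a b x y : a <= b -> Rabs (clamp a b x - clamp a b y) <= Rabs (x - y).
Proof.
  intros H. unfold clamp, Rmax, Rmin. repeat destruct Rle_dec; unfold Rabs; repeat destruct Rcase_abs; lra.
Qed.

Lemma continuous_clamp (g : R -> R) a b : a <= b -> continuous_within a b g ->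
  forall x, continuous (fun x => g (clamp a b x)) x.
Proof.
  intros Hab H x. apply continuous_of_Rabs_eps. intros eps.
  destruct (H (clamp a b x) (clamp_between a b x Hab) eps (cond_pos eps)) as [d [Hd Hd']].
  exists (mkposreal d Hd). simpl. intros y Hy. apply Hd'; [now apply clamp_between|].
  eapply Rle_lt_trans; [apply Rabs_clamp_sub_le; auto | exact Hy].
Qed.

Lemma locally_clamp_id a b x : a < x < b -> locally x (fun y => clamp a b y = y).
Proof.
  intros H. apply locally_of_Rabs.
  assert (Hd : 0 < Rmin (x - a) (b - x)) by (apply Rmin_glb_lt; lra).
  exists (mkposreal _ Hd). simpl. intros y Hy. apply clamp_id.
  pose proof (Rmin_l (x - a) (b - x)). pose proof (Rmin_r (x - a) (b - x)).
  apply Rlt_le, Rabs_le_between in Hy. lra.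
Qed.

Lemma le_of_derive_nonneg (h dh : R -> R) a b : a <= b ->
  (forall x, a < x < b -> is_derive h x (dh x)) -> (forall x, a <= x <= b -> 0 <= dh x) ->
  (forall x, continuous h x) -> h a <= h b.
Proof.
  intros Hab Hd Hpos Hc.
  destruct (MVT_gen h a b dh) as [c [Hc' Eq]].
  - rewrite Rmin_left, Rmax_right by lra. exact Hd.
  - intros x _. apply continuity_pt_filterlim, Hc.
  - rewrite Rmin_left, Rmax_right in Hc' by lra. simpl in Eq.
    pose proof (Hpos c Hc'). nra.
Qed.

Lemma Rabs_sub_le_RInt (f df g : R -> R) k a b : a <= b -> 0 <= k ->
  continuous_within a b f -> continuous_within a b g ->
  (forall x, a < x < b -> is_derive f x (df x)) -> (forall x, a <= x <= b -> Rabs (df x) <= k * g x) ->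
  Rabs (f b - f a) <= k * RInt g a b.
Proof.
  intros Hab Hk Cf Cg Hd Hb.
  set (fc := fun x => f (clamp a b x)). set (gc := fun x => g (clamp a b x)).
  assert (CF : forall x, continuous fc x) by now apply continuous_clamp.
  assert (CG : forall x, continuous gc x) by now apply continuous_clamp.
  set (G := fun x => RInt gc a x).
  assert (DG : forall x, is_derive G x (gc x)).
  { intros x. apply (is_derive_RInt (V := R_CompleteNormedModule) gc G a x); [| apply CG].
    apply locally_of_Rabs. exists (mkposreal 1 Rlt_0_1). intros y _.
    apply (RInt_correct (V := R_CompleteNormedModule)), ex_RInt_continuousR. auto. }
  assert (DF : forall x, a < x < b -> is_derive fc x (df x)).
  { intros x Hx. apply (is_derive_ext_loc f fc); [| now apply Hd].
    eapply filter_imp; [| apply (locally_clamp_id a b x Hx)]. intros y Hy. unfold fc. now rewrite Hy. }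
  assert (CGF : forall sg, -1 <= sg <= 1 -> k * G a - sg * fc a <= k * G b - sg * fc b).
  { intros sg Hsg.
    apply (le_of_derive_nonneg (fun x => k * G x - sg * fc x) (fun x => k * gc x - sg * df x)); auto.
    - intros x Hx. apply is_derive_Reals, derivable_pt_lim_minus; apply is_derive_Reals;
        [apply (is_derive_scal G), DG | apply (is_derive_scal fc); now apply DF].
    - intros x Hx. unfold gc. rewrite clamp_id by lra. pose proof (Hb x Hx).
      apply Rabs_le_between in H. nra.
    - intros x. apply continuous_minusR; apply continuous_multR; auto using continuous_constR.
      apply (ex_derive_continuous (K := R_AbsRing) (V := R_NormedModule)). eexists. apply DG. }
  assert (EG : RInt g a b = G b).
  { unfold G. apply RInt_ext. intros x Hx. rewrite Rmin_left, Rmax_right in Hx by lra.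
    unfold gc. now rewrite clamp_id by lra. }
  assert (Ga : G a = 0) by (unfold G; rewrite RInt_point; reflexivity).
  replace (f b - f a) with (fc b - fc a) by (unfold fc; rewrite !clamp_id by lra; reflexivity).
  pose proof (CGF 1 ltac:(lra)). pose proof (CGF (-1) ltac:(lra)).
  rewrite Ga in *. apply Rabs_le. rewrite EG. lra.
Qed.

Lemma ex_RInt_continuous_within (g : R -> R) a b : a <= b -> continuous_within a b g -> ex_RInt g a b.
Proof.
  intros Hab H. apply (ex_RInt_ext (fun x => g (clamp a b x))).
  - intros x Hx. rewrite Rmin_left, Rmax_right in Hx by lra. now rewrite clamp_id by lra.
  - apply ex_RInt_continuousR. intros z _. now apply continuous_clamp.
Qed.

(** * The pointwise flux estimate *)

Lemma Rabs_two_mul_le a b : Rabs (2 * (a * b)) <= a ^ 2 + b ^ 2.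
Proof. pose proof (pow2_ge_0 (a + b)). pose proof (pow2_ge_0 (a - b)). apply Rabs_le. split; nra. Qed.

Lemma tangential_sq_le s c a b : s ^ 2 + c ^ 2 = 1 -> (- s * a + c * b) ^ 2 <= a ^ 2 + b ^ 2.
Proof.
  intros Hsc. pose proof (pow2_ge_0 (c * a + s * b)).
  assert ((- s * a + c * b) ^ 2 + (c * a + s * b) ^ 2 = (s ^ 2 + c ^ 2) * (a ^ 2 + b ^ 2)) by ring.
  rewrite Hsc in H0. lra.
Qed.

Lemma Rabs_two_cross_plus_le a b c d F rho eps : 0 < eps ->
  Rabs (2 * (a * b - c * d) + (1 - rho) * F)
  <= a ^ 2 + b ^ 2 + (c ^ 2 + d ^ 2) + (eps ^ 2 * F ^ 2 + (rho - 1) ^ 2 / (4 * eps ^ 2)).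
Proof.
  intros He.
  replace (2 * (a * b - c * d) + (1 - rho) * F)
    with (2 * (a * b) + 2 * ((- c) * d) + 2 * ((eps * F) * ((1 - rho) / (2 * eps)))) by (field; lra).
  pose proof (Rabs_two_mul_le a b). pose proof (Rabs_two_mul_le (- c) d).
  pose proof (Rabs_two_mul_le (eps * F) ((1 - rho) / (2 * eps))).
  replace ((- c) ^ 2) with (c ^ 2) in * by ring.
  replace ((eps * F) ^ 2 + ((1 - rho) / (2 * eps)) ^ 2)
    with (eps ^ 2 * F ^ 2 + (rho - 1) ^ 2 / (4 * eps ^ 2)) in * by (field; lra).
  eapply Rle_trans; [apply Rabs_triang|]. eapply Rle_trans; [apply Rplus_le_compat_r, Rabs_triang|].
  lra.
Qed.

(* [(- s, c)] is the unit tangent of the circle: only tangential components enter, and the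
   [(1 - rho)] term is absorbed by AM-GM with weights [eps] and [1 / eps]. *)
Lemma flux_density_le (d0r d0i d1r d1i d2r d2i rho F01 F02 F12 eps lam C c s : R) :
  1 <= C -> 1 <= C * lam -> 0 < eps -> s ^ 2 + c ^ 2 = 1 ->
  Rabs (- s * (2 * (d0r * d1i - d0i * d1r) + (1 - rho) * F01)
        + c * (2 * (d0r * d2i - d0i * d2r) + (1 - rho) * F02))
  <= 2 * C * (/ 2 * ((d0r ^ 2 + d0i ^ 2) + (d1r ^ 2 + d1i ^ 2) + (d2r ^ 2 + d2i ^ 2))
              + eps ^ 2 / 2 * (F01 ^ 2 + F02 ^ 2 + F12 ^ 2) + lam / (8 * eps ^ 2) * (rho - 1) ^ 2).
Proof.
  intros HC HCl He Hsc.
  set (tr := - s * d1r + c * d2r). set (ti := - s * d1i + c * d2i). set (Ft := - s * F01 + c * F02).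
  assert (Htr : tr ^ 2 <= d1r ^ 2 + d2r ^ 2) by now apply tangential_sq_le.
  assert (Hti : ti ^ 2 <= d1i ^ 2 + d2i ^ 2) by now apply tangential_sq_le.
  assert (HFt : eps ^ 2 * Ft ^ 2 <= eps ^ 2 * (F01 ^ 2 + F02 ^ 2))
    by (apply Rmult_le_compat_l; [apply pow2_ge_0 | now apply tangential_sq_le]).
  replace (- s * (2 * (d0r * d1i - d0i * d1r) + (1 - rho) * F01)
           + c * (2 * (d0r * d2i - d0i * d2r) + (1 - rho) * F02))
    with (2 * (d0r * ti - d0i * tr) + (1 - rho) * Ft) by (unfold tr, ti, Ft; ring).
  eapply Rle_trans; [apply (Rabs_two_cross_plus_le _ _ _ _ _ _ _ He)|].
  set (X := (rho - 1) ^ 2 / (4 * eps ^ 2)).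
  set (S := (d0r ^ 2 + d0i ^ 2) + (d1r ^ 2 + d1i ^ 2) + (d2r ^ 2 + d2i ^ 2)
            + eps ^ 2 * (F01 ^ 2 + F02 ^ 2 + F12 ^ 2)).
  assert (HX : 0 <= X)
    by (unfold X; apply Rmult_le_pos; [apply pow2_ge_0 | apply Rlt_le, Rinv_0_lt_compat; nra]).
  assert (HS : 0 <= S) by (unfold S; pose proof (pow2_ge_0 d0r); pose proof (pow2_ge_0 d0i);
    pose proof (pow2_ge_0 d1r); pose proof (pow2_ge_0 d1i); pose proof (pow2_ge_0 d2r);
    pose proof (pow2_ge_0 d2i); pose proof (pow2_ge_0 F01); pose proof (pow2_ge_0 F02);
    pose proof (pow2_ge_0 F12); nra).
  replace (2 * C * (/ 2 * ((d0r ^ 2 + d0i ^ 2) + (d1r ^ 2 + d1i ^ 2) + (d2r ^ 2 + d2i ^ 2))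
           + eps ^ 2 / 2 * (F01 ^ 2 + F02 ^ 2 + F12 ^ 2) + lam / (8 * eps ^ 2) * (rho - 1) ^ 2))
    with (C * S + C * lam * X) by (unfold S, X; field; lra).
  assert (d0r ^ 2 + ti ^ 2 + (d0i ^ 2 + tr ^ 2) + (eps ^ 2 * Ft ^ 2 + X) <= S + X)
    by (unfold S; pose proof (pow2_ge_0 (eps * F12));
        replace ((eps * F12) ^ 2) with (eps ^ 2 * F12 ^ 2) in * by ring; lra).
  assert (S <= C * S) by nra. assert (X <= C * lam * X) by nra.
  lra.
Qed.

(** * The vorticity of a configuration *)

Lemma derivable_pt_lim_tangential_comb (f1 f2 : R -> R) x l1 l2 a b c :
  derivable_pt_lim f1 x l1 -> derivable_pt_lim f2 x l2 ->
  derivable_pt_lim (fun u => (- f1 u * a + f2 u * b) * c) x ((- l1 * a + l2 * b) * c).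
Proof.
  intros H1 H2.
  pose proof (derivable_pt_lim_mult _ (fct_cte c) x _ _
    (derivable_pt_lim_plus _ _ x _ _
      (derivable_pt_lim_mult _ _ x _ _ (derivable_pt_lim_opp _ x _ H1) (derivable_pt_lim_const a x))
      (derivable_pt_lim_mult _ _ x _ _ H2 (derivable_pt_lim_const b x)))
    (derivable_pt_lim_const c x)) as H.
  unfold mult_fct, plus_fct, opp_fct, fct_cte in H.
  match type of H with derivable_pt_lim _ _ ?v => replace ((- l1 * a + l2 * b) * c) with v by ring end.
  exact H.
Qed.

Lemma continuity_2d_pt_tangential_comb (G1 G2 : F3) r s t : 0 <= r ->
  continuous3_at G1 s (r * cos t) (r * sin t) -> continuous3_at G2 s (r * cos t) (r * sin t) ->
  continuity_2d_pt
    (fun u v => (- G1 u (r * cos v) (r * sin v) * sin v + G2 u (r * cos v) (r * sin v) * cos v) * r) s t.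
Proof.
  intros Hr H1 H2. apply continuity_2d_pt_mult; [| apply continuity_2d_pt_const].
  apply continuity_2d_pt_plus; apply continuity_2d_pt_mult.
  - apply continuity_2d_pt_opp, continuous3_at_circle; assumption.
  - apply continuity_2d_pt_snd. apply (ex_derive_continuous (K := R_AbsRing) (V := R_NormedModule)).
    auto_derive. auto.
  - apply continuous3_at_circle; assumption.
  - apply continuity_2d_pt_snd. apply (ex_derive_continuous (K := R_AbsRing) (V := R_NormedModule)).
    auto_derive. auto.
Qed.

Section Configuration.
Variables (O : R -> R -> R -> Prop) (p q A0 A1 A2 : F3).
Hypothesis hO : open3 O.
Hypotheses (hp : smooth_on O p) (hq : smooth_on O q)
  (hA0 : smooth_on O A0) (hA1 : smooth_on O A1) (hA2 : smooth_on O A2).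

Definition djcur (A : F3) (k i : nat) : F3 := fun s x y =>
  (- Dpart i q s x y) * (Dpart k p s x y + A s x y * q s x y)
  + (- q s x y) * (Dpart i (Dpart k p) s x y + (Dpart i A s x y * q s x y + A s x y * Dpart i q s x y))
  + (Dpart i p s x y * (Dpart k q s x y - A s x y * p s x y)
     + p s x y * (Dpart i (Dpart k q) s x y - (Dpart i A s x y * p s x y + A s x y * Dpart i p s x y))).

Definition jA (k : nat) : F3 := fun s x y => jcur p q (Aof A0 A1 A2 k) k s x y + Aof A0 A1 A2 k s x y.

Definition djA (k i : nat) : F3 := fun s x y =>
  djcur (Aof A0 A1 A2 k) k i s x y + Dpart i (Aof A0 A1 A2 k) s x y.

Lemma smooth_on_Aof k : smooth_on O (Aof A0 A1 A2 k).
Proof. destruct k as [|[|k]]; simpl; assumption. Qed.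

Ltac smooth_leaf := repeat apply smooth_on_Dpart; first [assumption | apply smooth_on_Aof].

Lemma has_partial_jcur (A : F3) k i s x y : smooth_on O A -> O s x y -> (i <= 2)%nat ->
  has_partial i (jcur p q A k) s x y (djcur A k i s x y).
Proof.
  intros HA H Hi. unfold jcur, Dre, Dim.
  eapply has_partial_val; [| repeat first [ apply has_partial_plus | apply has_partial_minus
    | apply has_partial_mult | apply has_partial_opp
    | apply (smooth_on_has_partial O); [smooth_leaf | assumption | assumption] ]].
  unfold djcur. ring.
Qed.

Lemma has_partial_jA k i s x y : O s x y -> (i <= 2)%nat -> has_partial i (jA k) s x y (djA k i s x y).
Proof.
  intros H Hi. apply has_partial_plus.
  - apply has_partial_jcur; auto. apply smooth_on_Aof.
  - apply (smooth_on_has_partial O); auto. apply smooth_on_Aof.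
Qed.

Lemma omega_eq_curl s x y : O s x y -> omega p q A1 A2 s x y = / 2 * (djA 2 1 s x y - djA 1 2 s x y).
Proof.
  intros H. unfold omega, djA. cbn [Aof].
  rewrite (Dpart_unique _ _ _ _ _ _ (has_partial_jcur A2 2 1 s x y hA2 H ltac:(lia))).
  rewrite (Dpart_unique _ _ _ _ _ _ (has_partial_jcur A1 1 2 s x y hA1 H ltac:(lia))).
  ring.
Qed.

Ltac continuous3_build := repeat first [ apply continuous3_at_plus | apply continuous3_at_minus
  | apply continuous3_at_mult | apply continuous3_at_opp | apply continuous3_at_pow2
  | apply continuous3_at_const | apply (smooth_on_continuous3 O); [smooth_leaf | assumption] ].

Lemma continuous3_at_jA k s x y : O s x y -> continuous3_at (jA k) s x y.
Proof. intros H. unfold jA, jcur, Dre, Dim. continuous3_build. Qed.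

Lemma continuous3_at_djA k i s x y : O s x y -> continuous3_at (djA k i) s x y.
Proof. intros H. unfold djA, djcur. continuous3_build. Qed.

Lemma continuous3_at_e3d eps lam s x y : O s x y -> continuous3_at (e3d eps lam p q A0 A1 A2) s x y.
Proof. intros H. unfold e3d, Dsq, Dre, Dim, Fab. cbn [Aof]. continuous3_build. Qed.

Lemma djA_antisym k s x y : (k = 1 \/ k = 2)%nat -> O s x y ->
  djA k 0 s x y - djA 0 k s x y =
  2 * (Dre p q A0 0 s x y * Dim p q (Aof A0 A1 A2 k) k s x y
       - Dim p q A0 0 s x y * Dre p q (Aof A0 A1 A2 k) k s x y)
  + (1 - (p s x y ^ 2 + q s x y ^ 2)) * Fab A0 A1 A2 0 k s x y.
Proof.
  intros [-> | ->] H; unfold djA, djcur, Dre, Dim, Fab; cbn [Aof].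
  - rewrite (smooth_on_Schwarz_01 O hO p s x y hp H), (smooth_on_Schwarz_01 O hO q s x y hq H). ring.
  - rewrite (smooth_on_Schwarz_02 O hO p s x y hp H), (smooth_on_Schwarz_02 O hO q s x y hq H). ring.
Qed.

Definition flux r s t :=
  (- jA 1 s (r * cos t) (r * sin t) * sin t + jA 2 s (r * cos t) (r * sin t) * cos t) * r.

Definition dflux r s t :=
  (- djA 1 0 s (r * cos t) (r * sin t) * sin t + djA 2 0 s (r * cos t) (r * sin t) * cos t) * r.

Definition djA0_circle r s t :=
  djA 0 1 s (r * cos t) (r * sin t) * (- (r * sin t)) + djA 0 2 s (r * cos t) (r * sin t) * (r * cos t).

Lemma disk_int_omega Rad r s : (forall x y, x ^ 2 + y ^ 2 < Rad ^ 2 -> O s x y) -> 0 < r < Rad ->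
  disk_int (omega p q A1 A2 s) r = / 2 * RInt (flux r s) 0 (2 * PI).
Proof.
  intros HD Hr.
  set (D1V2 := djA 2 1 s). set (D2V1 := djA 1 2 s).
  assert (HG : green_hyp (jA 1 s) (jA 2 s) D1V2 D2V1 Rad).
  { intros x y Hxy. pose proof (HD x y Hxy) as H.
    repeat split; try apply continuous3_at_slice_s; auto using continuous3_at_jA, continuous3_at_djA.
    - exact (has_partial_jA 2 1 s x y H ltac:(lia)).
    - exact (has_partial_jA 1 2 s x y H ltac:(lia)). }
  pose proof (is_RInt_scal (V := R_CompleteNormedModule) _ (- r) r (/ 2) _
    (is_RInt_disk_curl _ _ D1V2 D2V1 Rad r HG Hr)) as GR.
  apply (is_RInt_ext (V := R_CompleteNormedModule) _
    (fun x => Rint (fun y => omega p q A1 A2 s x y) (- sqrt (r ^ 2 - x ^ 2)) (sqrt (r ^ 2 - x ^ 2)))) in GR.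
  - unfold disk_int. rewrite Rint_RInt by (eexists; exact GR). now rewrite (is_RInt_unique _ _ _ _ GR).
  - intros x Hx. rewrite Rmin_left, Rmax_right in Hx by lra.
    set (h := sqrt (r ^ 2 - x ^ 2)).
    assert (Hin : forall u, Rmin (- h) h <= u <= Rmax (- h) h -> O s x u).
    { intros u Hu. apply HD, (closed_disk_sub Rad r Hr).
      assert (Hh : 0 <= h) by apply sqrt_pos.
      pose proof (pow2_le_of_Rabs_le u h (Rabs_le_of_between (- h) h h u
        ltac:(rewrite Rabs_Ropp, Rabs_pos_eq; lra) ltac:(rewrite Rabs_pos_eq; lra) Hu)).
      pose proof (chord_sq r x ltac:(lra) ltac:(lra)). fold h in H0. lra. }
    assert (ED : ex_RInt (fun y => D1V2 x y - D2V1 x y) (- h) h).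
    { apply ex_RInt_slice with (g := fun a b => D1V2 a b - D2V1 a b). intros u Hu.
      apply continuity_2d_pt_minus; apply continuous3_at_slice_s, continuous3_at_djA, Hin, Hu. }
    assert (EQ : forall y, Rmin (- h) h < y < Rmax (- h) h ->
        / 2 * (D1V2 x y - D2V1 x y) = omega p q A1 A2 s x y).
    { intros y Hy. symmetry. apply omega_eq_curl, Hin. lra. }
    rewrite Rint_RInt.
    + rewrite <- (RInt_scalR _ _ _ _ ED). apply RInt_ext. exact EQ.
    + apply (ex_RInt_ext (fun y => / 2 * (D1V2 x y - D2V1 x y))); [exact EQ|].
      now apply ex_RInt_scalR.
Qed.

Lemma continuity_2d_pt_flux r s t : 0 <= r -> O s (r * cos t) (r * sin t) ->
  continuity_2d_pt (flux r) s t.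
Proof. intros Hr H. apply continuity_2d_pt_tangential_comb; auto using continuous3_at_jA. Qed.

Lemma continuity_2d_pt_dflux r s t : 0 <= r -> O s (r * cos t) (r * sin t) ->
  continuity_2d_pt (dflux r) s t.
Proof. intros Hr H. apply continuity_2d_pt_tangential_comb; auto using continuous3_at_djA. Qed.

Lemma continuity_2d_pt_e3d_circle eps lam r s t : 0 <= r -> O s (r * cos t) (r * sin t) ->
  continuity_2d_pt (fun u v => e3d eps lam p q A0 A1 A2 u (r * cos v) (r * sin v) * r) s t.
Proof.
  intros Hr H. apply continuity_2d_pt_mult; [| apply continuity_2d_pt_const].
  apply continuous3_at_circle; auto using continuous3_at_e3d.
Qed.

Lemma ex_RInt_e3d_circle eps lam r s : 0 <= r -> (forall th, O s (r * cos th) (r * sin th)) ->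
  ex_RInt (fun th => e3d eps lam p q A0 A1 A2 s (r * cos th) (r * sin th) * r) 0 (2 * PI).
Proof.
  intros Hr H. apply ex_RInt_continuousR. intros z _.
  apply (continuous_of_continuity_2d_pt
    (fun u th => e3d eps lam p q A0 A1 A2 u (r * cos th) (r * sin th) * r)).
  now apply continuity_2d_pt_e3d_circle.
Qed.

Lemma continuous_within_RInt_e3d_circle eps lam r a b : 0 <= r ->
  (forall s th, a <= s <= b -> O s (r * cos th) (r * sin th)) ->
  continuous_within a b (fun s => RInt (fun th => e3d eps lam p q A0 A1 A2 s (r * cos th) (r * sin th) * r)
                                   0 (2 * PI)).
Proof.
  intros Hr H.
  apply (continuous_within_RInt_param (fun u th => e3d eps lam p q A0 A1 A2 u (r * cos th) (r * sin th) * r));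
    [pose proof PI_RGT_0; lra | |].
  - intros c th Hc _. now apply continuity_2d_pt_e3d_circle, H.
  - intros u Hu. apply ex_RInt_e3d_circle; auto.
Qed.

Lemma continuous_within_RInt_flux r a b : 0 <= r ->
  (forall s th, a <= s <= b -> O s (r * cos th) (r * sin th)) ->
  continuous_within a b (fun s => RInt (flux r s) 0 (2 * PI)).
Proof.
  intros Hr H. apply continuous_within_RInt_param; [pose proof PI_RGT_0; lra | |].
  - intros c th Hc _. now apply continuity_2d_pt_flux, H.
  - intros u Hu. apply ex_RInt_continuousR. intros z _.
    now apply continuous_of_continuity_2d_pt, continuity_2d_pt_flux, H.
Qed.

Lemma is_derive_flux r s t : O s (r * cos t) (r * sin t) -> is_derive (fun u => flux r u t) s (dflux r s t).
Proof.
  intros H. apply is_derive_Reals, derivable_pt_lim_tangential_comb.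
  - exact (has_partial_jA 1 0 s _ _ H ltac:(lia)).
  - exact (has_partial_jA 2 0 s _ _ H ltac:(lia)).
Qed.

Lemma is_derive_RInt_flux T r : 0 <= r -> (forall s t, 0 <= s <= T -> O s (r * cos t) (r * sin t)) ->
  forall s0, 0 < s0 < T ->
  is_derive (fun s => RInt (flux r s) 0 (2 * PI)) s0 (RInt (dflux r s0) 0 (2 * PI)).
Proof.
  intros Hr HC s0 Hs0.
  assert (Hd : 0 < Rmin s0 (T - s0)) by (apply Rmin_glb_lt; lra).
  assert (Hin : forall y t, Rabs (y - s0) < Rmin s0 (T - s0) -> O y (r * cos t) (r * sin t)).
  { intros y t Hy. apply HC. pose proof (Rmin_l s0 (T - s0)). pose proof (Rmin_r s0 (T - s0)).
    apply Rlt_le, Rabs_le_between in Hy. lra. }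
  eapply is_derive_ext; [intros; reflexivity|].
  replace (RInt (dflux r s0) 0 (2 * PI)) with (RInt (fun t => Derive (fun u => flux r u t) s0) 0 (2 * PI)).
  - apply (is_derive_RInt_param (flux r)).
    + apply locally_of_Rabs. exists (mkposreal _ Hd). intros y Hy t _.
      eexists. now apply is_derive_flux, Hin.
    + intros t _. apply continuity_2d_pt_ext_loc with (dflux r).
      * exists (mkposreal _ Hd). simpl. intros u v Hu Hv. symmetry.
        now apply is_derive_unique, is_derive_flux, Hin.
      * apply continuity_2d_pt_dflux, HC; auto; lra.
    + apply locally_of_Rabs. exists (mkposreal _ Hd). intros y Hy.
      apply ex_RInt_continuousR. intros z _.
      now apply continuous_of_continuity_2d_pt, continuity_2d_pt_flux, Hin.
  - apply RInt_ext. intros t _. apply is_derive_unique, is_derive_flux, HC. lra.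
Qed.

Lemma derivable_jA0_along_circle r s t : O s (r * cos t) (r * sin t) ->
  derivable_pt_lim (fun t => jA 0 s (r * cos t) (r * sin t)) t (djA0_circle r s t).
Proof.
  intros H. apply (derivable_along_circle O hO (jA 0) (djA 0 1) (djA 0 2)); auto.
  - intros x y Hxy. exact (has_partial_jA 0 1 s x y Hxy ltac:(lia)).
  - now apply continuous3_at_djA.
  - exact (has_partial_jA 0 2 s _ _ H ltac:(lia)).
Qed.

Lemma continuous_djA0_circle r s t : O s (r * cos t) (r * sin t) -> continuous (djA0_circle r s) t.
Proof.
  intros H. unfold djA0_circle. apply continuous_plusR; apply continuous_multR.
  - apply continuous_along_circle, continuous3_at_slice_s, continuous3_at_djA, H.
  - apply continuous_oppR, continuous_mult_sin.
  - apply continuous_along_circle, continuous3_at_slice_s, continuous3_at_djA, H.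
  - apply continuous_mult_cos.
Qed.

Lemma RInt_djA0_circle r s : (forall t, O s (r * cos t) (r * sin t)) ->
  RInt (djA0_circle r s) 0 (2 * PI) = 0.
Proof.
  intros H.
  rewrite (is_RInt_unique _ _ _ _ (is_RInt_derive (V := R_CompleteNormedModule)
    (fun t => jA 0 s (r * cos t) (r * sin t)) (djA0_circle r s) 0 (2 * PI)
    (fun t _ => proj2 (is_derive_Reals _ _ _) (derivable_jA0_along_circle r s t (H t)))
    (fun t _ => continuous_djA0_circle r s t (H t)))).
  rewrite cos_2PI, sin_2PI, cos_0, sin_0. unfold minus, plus, opp; simpl. ring.
Qed.

Lemma Rabs_dflux_sub_le eps lam C r s t : 1 <= C -> 1 <= C * lam -> 0 < eps -> 0 <= r ->
  O s (r * cos t) (r * sin t) ->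
  Rabs (dflux r s t - djA0_circle r s t) <= 2 * C * (e3d eps lam p q A0 A1 A2 s (r * cos t) (r * sin t) * r).
Proof.
  intros HC HCl He Hr H.
  replace (dflux r s t - djA0_circle r s t) with
    ((- sin t * (djA 1 0 s (r * cos t) (r * sin t) - djA 0 1 s (r * cos t) (r * sin t))
      + cos t * (djA 2 0 s (r * cos t) (r * sin t) - djA 0 2 s (r * cos t) (r * sin t))) * r)
    by (unfold dflux, djA0_circle; ring).
  rewrite !djA_antisym by auto.
  rewrite Rabs_mult, (Rabs_pos_eq r Hr), <- Rmult_assoc.
  apply Rmult_le_compat_r; [exact Hr|].
  unfold e3d, Dsq. cbn [Aof].
  apply flux_density_le; auto. pose proof (sin2_cos2 t). unfold Rsqr in H0. lra.
Qed.

Lemma Rabs_RInt_dflux_le eps lam C r s : 1 <= C -> 1 <= C * lam -> 0 < eps -> 0 <= r ->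
  (forall t, O s (r * cos t) (r * sin t)) ->
  Rabs (RInt (dflux r s) 0 (2 * PI))
  <= 2 * C * RInt (fun t => e3d eps lam p q A0 A1 A2 s (r * cos t) (r * sin t) * r) 0 (2 * PI).
Proof.
  intros HC HCl He Hr H.
  assert (H2P : 0 <= 2 * PI) by (pose proof PI_RGT_0; lra).
  set (e := fun t => e3d eps lam p q A0 A1 A2 s (r * cos t) (r * sin t) * r).
  set (g := fun t => dflux r s t - djA0_circle r s t).
  assert (ED : ex_RInt (dflux r s) 0 (2 * PI)) by (apply ex_RInt_continuousR; intros;
    now apply continuous_of_continuity_2d_pt, continuity_2d_pt_dflux).
  assert (EC : ex_RInt (djA0_circle r s) 0 (2 * PI))
    by (apply ex_RInt_continuousR; intros; now apply continuous_djA0_circle).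
  assert (EE : ex_RInt e 0 (2 * PI)) by now apply ex_RInt_e3d_circle.
  assert (EG : ex_RInt g 0 (2 * PI)) by now apply ex_RInt_minusR.
  replace (RInt (dflux r s) 0 (2 * PI)) with (RInt g 0 (2 * PI))
    by (unfold g; rewrite RInt_minusR, RInt_djA0_circle by auto; lra).
  rewrite <- RInt_scalR by exact EE.
  eapply Rle_trans; [apply abs_RInt_le; auto|].
  apply RInt_le; auto.
  - apply (ex_RInt_continuous (V := R_CompleteNormedModule)). intros z _.
    apply continuous_Rabs_comp. unfold g. apply continuous_minusR.
    + now apply continuous_of_continuity_2d_pt, continuity_2d_pt_dflux.
    + now apply continuous_djA0_circle.
  - now apply ex_RInt_scalR.
  - intros t _. now apply Rabs_dflux_sub_le.
Qed.

Lemma Rabs_RInt_flux_sub_le eps lam C T r t : 1 <= C -> 1 <= C * lam -> 0 < eps -> 0 <= r -> 0 < t < T ->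
  (forall s th, 0 <= s <= T -> O s (r * cos th) (r * sin th)) ->
  Rabs (RInt (flux r t) 0 (2 * PI) - RInt (flux r 0) 0 (2 * PI))
  <= 2 * C * RInt (fun s => RInt (fun th => e3d eps lam p q A0 A1 A2 s (r * cos th) (r * sin th) * r)
                                 0 (2 * PI)) 0 t.
Proof.
  intros HC HCl He Hr Ht HO.
  assert (H2P : 0 <= 2 * PI) by (pose proof PI_RGT_0; lra).
  apply (Rabs_sub_le_RInt (fun s => RInt (flux r s) 0 (2 * PI)) (fun s => RInt (dflux r s) 0 (2 * PI)));
    [lra | lra | | | |].
  - apply continuous_within_RInt_flux; auto. intros; apply HO; lra.
  - apply continuous_within_RInt_e3d_circle; auto. intros; apply HO; lra.
  - intros x Hx. apply (is_derive_RInt_flux T); auto. lra.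
  - intros x Hx. apply Rabs_RInt_dflux_le; auto. intros th. apply HO. lra.
Qed.

End Configuration.

Lemma cyl_int_RInt (h : F3) t r : 0 <= t ->
  continuous_within 0 t (fun s => RInt (fun th => h s (r * cos th) (r * sin th) * r) 0 (2 * PI)) ->
  (forall s, 0 <= s <= t -> ex_RInt (fun th => h s (r * cos th) (r * sin th) * r) 0 (2 * PI)) ->
  cyl_int h t r = RInt (fun s => RInt (fun th => h s (r * cos th) (r * sin th) * r) 0 (2 * PI)) 0 t.
Proof.
  intros Ht Hc Hex. unfold cyl_int.
  assert (Ein : forall s, Rmin 0 t < s < Rmax 0 t ->
    RInt (fun th => h s (r * cos th) (r * sin th) * r) 0 (2 * PI)
    = Rint (fun th => h s (r * cos th) (r * sin th) * r) 0 (2 * PI)).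
  { intros s Hs. rewrite Rmin_left, Rmax_right in Hs by lra. symmetry. apply Rint_RInt, Hex. lra. }
  rewrite Rint_RInt.
  - symmetry. now apply RInt_ext.
  - apply (ex_RInt_ext _ _ _ _ Ein). now apply ex_RInt_continuous_within.
Qed.

Theorem lemma3p3 (T Rad eps lam : R) (p q A0 A1 A2 : F3)
  (O : R -> R -> R -> Prop)
  (hT : 0 < T) (hR : 0 < Rad) (heps : 0 < eps) (hlam : 0 < lam)
  (hO : open3 O)
  (hdom : forall s x y, 0 <= s <= T -> x ^ 2 + y ^ 2 <= Rad ^ 2 -> O s x y)
  (hp : smooth_on O p) (hq : smooth_on O q)
  (hA0 : smooth_on O A0) (hA1 : smooth_on O A1) (hA2 : smooth_on O A2) :
  forall r t, 0 < r < Rad -> 0 < t < T ->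
    Rabs (disk_int (omega p q A1 A2 t) r - disk_int (omega p q A1 A2 0) r)
    <= Rmax 1 (/ lam) * cyl_int (e3d eps lam p q A0 A1 A2) t r.
Proof.
  intros r t Hr Ht.
  set (C := Rmax 1 (/ lam)).
  assert (HC : 1 <= C) by apply Rmax_l.
  assert (HCl : 1 <= C * lam).
  { apply Rle_trans with (/ lam * lam); [right; field; lra|].
    apply Rmult_le_compat_r; [lra | apply Rmax_r]. }
  assert (HD : forall s, 0 <= s <= T -> forall x y, x ^ 2 + y ^ 2 < Rad ^ 2 -> O s x y)
    by (intros; apply hdom; auto; lra).
  assert (HO : forall s th, 0 <= s <= T -> O s (r * cos th) (r * sin th)).
  { intros s th Hs. apply hdom; auto. rewrite circle_sq. pose proof (pow2_lt_of_lt r Rad ltac:(lra)). lra. }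
  rewrite (disk_int_omega O p q A0 A1 A2 hp hq hA0 hA1 hA2 Rad r t),
    (disk_int_omega O p q A0 A1 A2 hp hq hA0 hA1 hA2 Rad r 0) by (auto; apply HD; lra).
  pose proof (Rabs_RInt_flux_sub_le O p q A0 A1 A2 hO hp hq hA0 hA1 hA2 eps lam C T r t
    HC HCl heps ltac:(lra) Ht HO) as Hflux.
  rewrite cyl_int_RInt; [| lra | |].
  - rewrite <- Rmult_minus_distr_l, Rabs_mult, Rabs_pos_eq by lra. lra.
  - apply (continuous_within_RInt_e3d_circle O); auto; [lra | intros; apply HO; lra].
  - intros s Hs. apply (ex_RInt_e3d_circle O); auto; [lra | intros; apply HO; lra].
Qed.
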